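(* Let $\alpha\in[1,2]$, $\varepsilon\in\mathbb{R}$, $T>0$, and let $U^n_\varepsilon\in V_N$ be the approximate solution at the $n$-th step of the fully discrete scheme \[ (U^{n+1}_\varepsilon,\phi)=(U^n_\varepsilon,\phi)-6\Delta t\left(U^{n+\frac12}_\varepsilon(U^{n+\frac12}_\varepsilon)_x,\phi\right)+\varepsilon^2\Delta t\left(\mathcal{D}^\alpha(U^{n+\frac12}_\varepsilon)_x,\phi\right)\ \ \forall\phi\in V_N,\qquad U^{n+\frac12}_\varepsilon=\tfrac{U^n_\varepsilon+U^{n+1}_\varepsilon}{2}. \] Suppose $(n+1)\Delta t\le T$, and let $\{v^\ell\}_{\ell\ge0}\subset V_N$ be defined by $v^0=U^n_\varepsilon$ and, for $\ell\ge0$, \[ (v^{\ell+1},\phi)=(U^n_\varepsilon,\phi)-\Delta t\left(\mathcal{B}\Big(\tfrac{U^n_\varepsilon+v^\ell}{2}\Big),\phi\right)+\tfrac12\varepsilon^2\Delta t\left(\mathcal{D}^\alpha(U^n_\varepsilon+v^{\ell+1})_x,\phi\right)\quad\forall\phi\in V_N, \] where $\mathcal{B}(v)=6vv_x$. Assume that $\Delta t$ satisfies \[ 6N\Delta t\le\frac{\zeta}{\eta\|U^n_\varepsilon\|_{1+\alpha}}, \] where $\zeta\in(0,1)$ and $\eta=\frac{8-\zeta}{1-\zeta}>8$. Then the sequence $\{v^\ell\}_{\ell\ge0}$ converges, $\lim_{\ell\to\infty}v^\ell=U^{n+1}_\varepsilon$, and \[ \|U^{n+1}_\varepsilon\|_{1+\alpha}\le\eta\|U^n_\varepsilon\|_{1+\alpha}.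 \]
   Context: $I=[-\pi,\pi]$; functions are $2\pi$-periodic. $(u,v)=\int_I u\bar v\,dx$. For $f\in L^2(I)$, $\hat f(k)=\frac{1}{2\pi}\int_I f(x)e^{-ikx}dx$. For $r\ge0$, $\|f\|_r=\left(\sum_{k\in\mathbb{Z}}(1+|k|^2)^r|\hat f(k)|^2\right)^{1/2}$. $V_N$ is the space of real-valued trigonometric polynomials spanned by $\{e^{ikx}:-N\le k\le N\}$, and $\mathcal{D}^\alpha f=\sum_{k}|k|^\alpha\hat f(k)e^{ikx}$. *)

From Stdlib Require Import Reals ZArith.
From Coquelicot Require Import Coquelicot.
Open Scope R_scope.

(* V_N: real-valued trigonometric polynomials of degree <= N, i.e. the real
   span of {e^{ikx} : |k| <= N} restricted to real-valued functions,
   which is the real span of cos(kx), sin(kx), 0 <= k <= N. *)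
Definition inVN (N : nat) (f : R -> R) : Prop :=
  exists a b : nat -> R, forall x : R,
    f x = sum_f_R0 (fun k => a k * cos (INR k * x) + b k * sin (INR k * x)) N.

Definition inner (u v : R -> R) : R := RInt (fun x => u x * v x) (- PI) PI.

Definition hatRe (f : R -> R) (k : Z) : R :=
  / (2 * PI) * RInt (fun x => f x * cos (IZR k * x)) (- PI) PI.
Definition hatIm (f : R -> R) (k : Z) : R :=
  - (/ (2 * PI) * RInt (fun x => f x * sin (IZR k * x)) (- PI) PI).
Definition hatsq (f : R -> R) (k : Z) : R := hatRe f k ^ 2 + hatIm f k ^ 2.

(* ||f||_r = ( sum_{k in Z} (1+|k|^2)^r |\hat f(k)|^2 )^{1/2};
   the k and -k terms (all nonnegative) are grouped. *)
Definition hnorm (r : R) (f : R -> R) : R :=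
  sqrt (hatsq f 0%Z +
        Series (fun n => Rpower (1 + (INR (S n)) ^ 2) r *
                   (hatsq f (Z.of_nat (S n)) + hatsq f (- Z.of_nat (S n))%Z))).

(* D^alpha f = sum_k |k|^alpha \hat f(k) e^{ikx}; for real f the k, -k terms
   combine to 2 Re(\hat f(k) e^{ikx}); the k = 0 term vanishes (alpha > 0). *)
Definition Dalpha (alpha : R) (f : R -> R) : R -> R := fun x =>
  Series (fun n => Rpower (INR (S n)) alpha *
     (2 * (hatRe f (Z.of_nat (S n)) * cos (INR (S n) * x)
           - hatIm f (Z.of_nat (S n)) * sin (INR (S n) * x)))).

Definition dx (f : R -> R) : R -> R := fun x => Derive f x.

Definition Bop (v : R -> R) : R -> R := fun x => 6 * v x * dx v x.

Definition scheme_step (N : nat) (alpha eps dt : R) (U0 U1 : R -> R) : Prop :=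
  let Uh := fun x => (U0 x + U1 x) / 2 in
  forall phi, inVN N phi ->
    inner U1 phi = inner U0 phi
                   - 6 * dt * inner (fun x => Uh x * dx Uh x) phi
                   + eps ^ 2 * dt * inner (Dalpha alpha (dx Uh)) phi.

Definition iter_step (N : nat) (alpha eps dt : R) (U0 vl vl1 : R -> R) : Prop :=
  forall phi, inVN N phi ->
    inner vl1 phi = inner U0 phi
                    - dt * inner (Bop (fun x => (U0 x + vl x) / 2)) phi
                    + / 2 * eps ^ 2 * dt
                        * inner (Dalpha alpha (dx (fun x => U0 x + vl1 x))) phi.

(* Expanding in the Fourier basis, [V_N] becomes the space of hermitian coefficient vectors on
   [|k| <= N] and the [H^s] norm a weighted [l^2] norm.  Both the scheme and the iteration then
   decouple into one Crank–Nicolson relation per mode, [V = U - dt B + i t (U + V)], where [t] is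
   the dispersive phase and [B_k = 3 i k (m * m)_k] is the nonlinear term at the midpoint [m].
   Since [|1 - i t| = |1 + i t| >= 1], the dispersion never amplifies, and everything rests on the
   nonlinearity: for [2 <= s <= 3] the weight ratio [w_s(j + j') / (w_s(j) w_s(j'))] is dominated
   by a kernel whose antidiagonal sums are at most [16], so Cauchy–Schwarz gives
   [|m * m'|_s <= 4 |m|_s |m'|_s] and hence [|B(m)|_s <= 12 N |m|_s^2].  Under the step-size
   condition the iterates therefore stay in the ball of radius [eta |U^n|_s] and contract with
   factor [zeta (9 - 2 zeta) / (8 - zeta) < 1]; their limit solves the scheme. *)

From Stdlib Require Import Reals ZArith Lra Lia Psatz.
From Coquelicot Require Import Coquelicot.
Open Scope R_scope.

(* Unlike [sum_f_R0 f n], which has [n + 1] terms, [fsum n f] has [n] and may be empty. *)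
Fixpoint fsum (n : nat) (f : nat -> R) : R :=
  match n with O => 0 | S n => fsum n f + f n end.

Lemma fsum_ext n f g : (forall i, (i < n)%nat -> f i = g i) -> fsum n f = fsum n g.
Proof.
  induction n as [|n IH]; intros H; simpl; auto.
  rewrite IH by (intros; apply H; lia). rewrite H by lia. reflexivity.
Qed.

Lemma fsum_plus n f g : fsum n (fun i => f i + g i) = fsum n f + fsum n g.
Proof. induction n as [|n IH]; simpl; [lra|]. rewrite IH; lra. Qed.

Lemma fsum_scal_l n c f : fsum n (fun i => c * f i) = c * fsum n f.
Proof. induction n as [|n IH]; simpl; [lra|]. rewrite IH; lra. Qed.

Lemma fsum_scal_r n c f : fsum n f * c = fsum n (fun i => f i * c).
Proof. induction n as [|n IH]; simpl; [lra|]. rewrite <- IH; lra. Qed.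

Lemma fsum_lincomb n f g h c d :
  fsum n f - c * fsum n g + d * fsum n h = fsum n (fun i => f i - c * g i + d * h i).
Proof. induction n as [|n IH]; simpl; [ring|]. rewrite <- IH. ring. Qed.

Lemma fsum_zero n : fsum n (fun _ => 0) = 0.
Proof. induction n as [|n IH]; simpl; lra. Qed.

Lemma fsum_le n f g : (forall i, (i < n)%nat -> f i <= g i) -> fsum n f <= fsum n g.
Proof.
  induction n as [|n IH]; intros H; simpl; [lra|].
  apply Rplus_le_compat; [apply IH; intros; apply H|apply H]; lia.
Qed.

Lemma fsum_indicator n p g :
  fsum n (fun i => if Nat.eq_dec i p then g i else 0) = if lt_dec p n then g p else 0.
Proof.
  induction n as [|n IH]; simpl.
  - destruct (lt_dec p 0); [lia|auto].
  - rewrite IH. destruct (Nat.eq_dec n p), (lt_dec p n), (lt_dec p (S n)); subst; try lia; lra.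
Qed.

Lemma fsum_shift n f : fsum (S n) f = f 0%nat + fsum n (fun i => f (S i)).
Proof. induction n as [|n IH]; [simpl; ring|]. cbn [fsum] in *. rewrite IH. ring. Qed.

Lemma sum_f_R0_fsum f N : sum_f_R0 f N = fsum (S N) f.
Proof. induction N as [|N IH]; simpl in *; [ring|]. rewrite IH. ring. Qed.

Lemma is_lim_seq_fsum n (F : nat -> nat -> R) (G : nat -> R) :
  (forall i, (i < n)%nat -> is_lim_seq (fun l => F l i) (G i)) ->
  is_lim_seq (fun l => fsum n (F l)) (fsum n G).
Proof.
  induction n as [|n IH]; simpl; intros H; [apply is_lim_seq_const|].
  apply is_lim_seq_plus'; [apply IH; intros|]; apply H; lia.
Qed.

Lemma sum_n_fsum (a : nat -> R) k : sum_n a k = fsum (S k) a.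
Proof.
  induction k as [|k IH]; [rewrite sum_O; simpl; ring|].
  rewrite sum_Sn, IH. reflexivity.
Qed.

Lemma Series_fsum (a : nat -> R) n :
  (forall k, (n <= k)%nat -> a k = 0) -> Series a = fsum n a.
Proof.
  intros H. apply is_series_unique. change (is_lim_seq (sum_n a) (fsum n a)).
  apply (is_lim_seq_ext_loc (fun _ => fsum n a)).
  - exists n. intros k Hk. rewrite sum_n_fsum.
    induction Hk as [|k Hk IH]; cbn [fsum] in *;
      [rewrite (H n) by lia; ring | rewrite (H (S k)) by lia; lra].
  - apply is_lim_seq_const.
Qed.

(* Sums over the frequencies [|j| <= N], with [j] and [-j] grouped as in [hnorm]. *)
Definition zsum (N : nat) (G : Z -> R) : R :=
  G 0%Z + fsum N (fun i => G (Z.of_nat (S i)) + G (- Z.of_nat (S i))%Z).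

Lemma zsum_ext N F G :
  (forall j, (Z.abs j <= Z.of_nat N)%Z -> F j = G j) -> zsum N F = zsum N G.
Proof.
  intros H. unfold zsum. rewrite H by lia. f_equal.
  apply fsum_ext. intros i Hi. rewrite !H by lia. reflexivity.
Qed.

Lemma zsum_plus N F G : zsum N (fun j => F j + G j) = zsum N F + zsum N G.
Proof.
  unfold zsum. rewrite (fsum_ext N _ (fun i => (F (Z.of_nat (S i)) + F (- Z.of_nat (S i))%Z)
                                          + (G (Z.of_nat (S i)) + G (- Z.of_nat (S i))%Z)))
    by (intros; ring).
  rewrite fsum_plus. ring.
Qed.

Lemma zsum_scal_l N c F : zsum N (fun j => c * F j) = c * zsum N F.
Proof.
  unfold zsum. rewrite (fsum_ext N _ (fun i => c * (F (Z.of_nat (S i)) + F (- Z.of_nat (S i))%Z)))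
    by (intros; ring).
  rewrite fsum_scal_l. ring.
Qed.

Lemma zsum_scal_r N c F : zsum N F * c = zsum N (fun j => F j * c).
Proof. rewrite Rmult_comm, <- zsum_scal_l. apply zsum_ext; intros; ring. Qed.

Lemma zsum_zero N : zsum N (fun _ => 0) = 0.
Proof.
  replace (zsum N (fun _ => 0)) with (zsum N (fun _ => 0 * 0)) by (apply zsum_ext; intros; ring).
  rewrite zsum_scal_l. ring.
Qed.

Lemma zsum_minus N F G : zsum N (fun j => F j - G j) = zsum N F - zsum N G.
Proof.
  rewrite (zsum_ext N _ (fun j => F j + (-1) * G j)) by (intros; ring).
  rewrite zsum_plus, zsum_scal_l. ring.
Qed.

Lemma zsum_le N F G :
  (forall j, (Z.abs j <= Z.of_nat N)%Z -> F j <= G j) -> zsum N F <= zsum N G.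
Proof.
  intros H. unfold zsum. apply Rplus_le_compat; [apply H; lia|].
  apply fsum_le. intros i Hi. apply Rplus_le_compat; apply H; lia.
Qed.

Lemma zsum_nonneg N F : (forall j, (Z.abs j <= Z.of_nat N)%Z -> 0 <= F j) -> 0 <= zsum N F.
Proof. intros H. rewrite <- (zsum_zero N). apply zsum_le. auto. Qed.

Lemma zsum_opp_index N F : zsum N (fun j => F (- j)%Z) = zsum N F.
Proof. unfold zsum. f_equal. apply fsum_ext. intros. rewrite Z.opp_involutive. ring. Qed.

Lemma zsum_swap N M (F : Z -> Z -> R) :
  zsum N (fun j => zsum M (F j)) = zsum M (fun k => zsum N (fun j => F j k)).
Proof.
  assert (Hfsum : forall n (G : nat -> Z -> R),
             fsum n (fun i => zsum M (G i)) = zsum M (fun k => fsum n (fun i => G i k))).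
  { induction n as [|n IH]; intros G; simpl.
    - symmetry. apply zsum_zero.
    - rewrite IH, <- zsum_plus. reflexivity. }
  unfold zsum at 1.
  rewrite (fsum_ext N _ (fun i => zsum M (fun k => F (Z.of_nat (S i)) k + F (- Z.of_nat (S i))%Z k)))
    by (intros; rewrite zsum_plus; reflexivity).
  rewrite Hfsum, <- zsum_plus. reflexivity.
Qed.

Lemma zsum_indicator N k (g : Z -> R) :
  zsum N (fun j => if Z.eq_dec j k then g j else 0) =
  if Z_le_dec (Z.abs k) (Z.of_nat N) then g k else 0.
Proof.
  unfold zsum. destruct (Z.eq_dec 0 k) as [<-|Hk0].
  - rewrite (fsum_ext _ _ (fun _ => 0)), fsum_zero.
    + destruct Z_le_dec; [ring|lia].
    + intros i Hi. do 2 (destruct Z.eq_dec; [lia|]). ring.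
  - destruct (Z_of_nat_complete_inf (Z.abs k)) as [[|p] Hp]; [lia|lia|].
    rewrite (fsum_ext _ _ (fun i => if Nat.eq_dec i p then g k else 0)), fsum_indicator.
    + destruct (lt_dec p N), Z_le_dec; try lia; ring.
    + intros i Hi.
      destruct (Z.eq_dec (Z.of_nat (S i)) k), (Z.eq_dec (- Z.of_nat (S i)) k), (Nat.eq_dec i p);
        subst; try lia; ring.
Qed.

Lemma zsum_term_le N F k :
  (forall j, 0 <= F j) -> (Z.abs k <= Z.of_nat N)%Z -> F k <= zsum N F.
Proof.
  intros HF Hk. apply Rle_trans with (zsum N (fun j => if Z.eq_dec j k then F j else 0)).
  - rewrite zsum_indicator. destruct Z_le_dec; [lra|lia].
  - apply zsum_le. intros j _. destruct Z.eq_dec; [lra|auto].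
Qed.

Lemma zsum_indicator_le N k r : 0 <= r -> zsum N (fun j => if Z.eq_dec j k then r else 0) <= r.
Proof. intros H. rewrite (zsum_indicator N k (fun _ => r)). destruct Z_le_dec; lra. Qed.

Lemma is_lim_seq_zsum N (F : nat -> Z -> R) (G : Z -> R) :
  (forall j, is_lim_seq (fun l => F l j) (G j)) ->
  is_lim_seq (fun l => zsum N (F l)) (zsum N G).
Proof.
  intros H. apply is_lim_seq_plus'; [apply H|].
  apply is_lim_seq_fsum. intros. apply is_lim_seq_plus'; apply H.
Qed.

Definition zsum2 N (F : Z -> Z -> R) : R := zsum N (fun j => zsum N (F j)).

Lemma zsum2_ext N F G : (forall j k, F j k = G j k) -> zsum2 N F = zsum2 N G.
Proof. intros H. apply zsum_ext; intros; apply zsum_ext; auto. Qed.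

Lemma zsum2_plus N F G : zsum2 N (fun j k => F j k + G j k) = zsum2 N F + zsum2 N G.
Proof. unfold zsum2. rewrite <- zsum_plus. apply zsum_ext; intros; apply zsum_plus. Qed.

Lemma zsum2_scal_l N c F : zsum2 N (fun j k => c * F j k) = c * zsum2 N F.
Proof. unfold zsum2. rewrite <- zsum_scal_l. apply zsum_ext; intros; apply zsum_scal_l. Qed.

Lemma zsum2_opp N F : zsum2 N (fun j k => - F j k) = - zsum2 N F.
Proof.
  rewrite <- (Rmult_1_l (zsum2 N F)), Ropp_mult_distr_l, <- zsum2_scal_l.
  apply zsum2_ext; intros; ring.
Qed.

Lemma zsum2_minus N F G : zsum2 N (fun j k => F j k - G j k) = zsum2 N F - zsum2 N G.
Proof. unfold zsum2. rewrite <- zsum_minus. apply zsum_ext; intros; apply zsum_minus. Qed.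

Lemma zsum2_prod N f g : zsum2 N (fun j k => f j * g k) = zsum N f * zsum N g.
Proof. unfold zsum2. rewrite zsum_scal_r. apply zsum_ext. intros. apply zsum_scal_l. Qed.

Lemma zsum2_transpose N F : zsum2 N F = zsum2 N (fun j k => F k j).
Proof. apply zsum_swap. Qed.

Lemma zsum2_le N F G : (forall j k, F j k <= G j k) -> zsum2 N F <= zsum2 N G.
Proof. intros H. apply zsum_le; intros; apply zsum_le; auto. Qed.

Lemma zsum2_nonneg N F : (forall j k, 0 <= F j k) -> 0 <= zsum2 N F.
Proof. intros H. apply zsum_nonneg; intros; apply zsum_nonneg; auto. Qed.

Lemma is_lim_seq_zsum2 N (F : nat -> Z -> Z -> R) (G : Z -> Z -> R) :
  (forall j k, is_lim_seq (fun l => F l j k) (G j k)) ->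
  is_lim_seq (fun l => zsum2 N (F l)) (zsum2 N G).
Proof. intros H. apply is_lim_seq_zsum. intros j. apply is_lim_seq_zsum. auto. Qed.

Lemma zsum2_antidiag_sym N k (G : Z -> Z -> R) : (forall j j', G j j' = G j' j) ->
  zsum2 N (fun j j' => if Z.eq_dec (j + j') k then IZR j' * G j j' else 0) =
  IZR k / 2 * zsum2 N (fun j j' => if Z.eq_dec (j + j') k then G j j' else 0).
Proof.
  intros HG.
  assert (Hswap : zsum2 N (fun j j' => if Z.eq_dec (j + j') k then IZR j' * G j j' else 0) =
                  zsum2 N (fun j j' => if Z.eq_dec (j + j') k then IZR j * G j j' else 0)).
  { rewrite zsum2_transpose. apply zsum2_ext. intros j j'. rewrite HG, Z.add_comm. reflexivity. }
  assert (Hsum : zsum2 N (fun j j' => if Z.eq_dec (j + j') k then IZR j' * G j j' else 0) +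
                 zsum2 N (fun j j' => if Z.eq_dec (j + j') k then IZR j * G j j' else 0) =
                 IZR k * zsum2 N (fun j j' => if Z.eq_dec (j + j') k then G j j' else 0)).
  { rewrite <- zsum2_plus, <- zsum2_scal_l. apply zsum2_ext. intros j j'.
    destruct Z.eq_dec as [<-|]; [rewrite plus_IZR|]; ring. }
  lra.
Qed.

Lemma quadratic_nonneg_discr A B C :
  0 <= A -> (forall t, 0 <= A * t * t - 2 * B * t + C) -> B * B <= A * C.
Proof.
  intros HA H. destruct (Rle_lt_or_eq_dec 0 A HA) as [HApos|<-].
  - specialize (H (B / A)).
    replace (A * (B / A) * (B / A) - 2 * B * (B / A) + C) with (C - B * B / A) in H by (field; lra).
    apply Rmult_le_reg_r with (/ A); [apply Rinv_0_lt_compat; auto|].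
    replace (A * C * / A) with C by (field; lra). unfold Rdiv in H. lra.
  - destruct (Req_dec B 0) as [->|HB]; [lra|].
    specialize (H ((C + 1) / (2 * B))).
    replace (0 * ((C + 1) / (2 * B)) * ((C + 1) / (2 * B)) - 2 * B * ((C + 1) / (2 * B)) + C)
      with (-1) in H by (field; auto).
    lra.
Qed.

Lemma cauchy_schwarz_functional (T : Type) (S : (T -> R) -> R)
  (Sext : forall f g, (forall x, f x = g x) -> S f = S g)
  (Splus : forall f g, S (fun x => f x + g x) = S f + S g)
  (Sscal : forall c f, S (fun x => c * f x) = c * S f)
  (Spos : forall f, (forall x, 0 <= f x) -> 0 <= S f)
  (a b : T -> R) :
  S (fun x => a x * b x) * S (fun x => a x * b x) <=
  S (fun x => a x * a x) * S (fun x => b x * b x).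
Proof.
  apply quadratic_nonneg_discr; [apply Spos; intros x; apply Rle_0_sqr|].
  intros t.
  replace (S (fun x => a x * a x) * t * t - 2 * S (fun x => a x * b x) * t + S (fun x => b x * b x))
    with (S (fun x => (a x * t - b x) * (a x * t - b x))).
  - apply Spos. intros x. apply Rle_0_sqr.
  - rewrite (Sext _ (fun x => (t * t) * (a x * a x) + ((-2 * t) * (a x * b x) + b x * b x)))
      by (intros; ring).
    rewrite !Splus, !Sscal. ring.
Qed.

Lemma zsum_cauchy_schwarz N (a b : Z -> R) :
  zsum N (fun j => a j * b j) * zsum N (fun j => a j * b j) <=
  zsum N (fun j => a j * a j) * zsum N (fun j => b j * b j).
Proof.
  apply (cauchy_schwarz_functional Z (zsum N)).
  - intros; apply zsum_ext; auto.
  - apply zsum_plus.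
  - apply zsum_scal_l.
  - intros; apply zsum_nonneg; auto.
Qed.

Lemma zsum2_cauchy_schwarz N (a b : Z -> Z -> R) :
  zsum2 N (fun j k => a j k * b j k) * zsum2 N (fun j k => a j k * b j k) <=
  zsum2 N (fun j k => a j k * a j k) * zsum2 N (fun j k => b j k * b j k).
Proof.
  exact (cauchy_schwarz_functional (Z * Z) (fun f => zsum2 N (fun j k => f (j, k)))
           (fun f g H => zsum2_ext N _ _ (fun j k => H (j, k)))
           (fun f g => zsum2_plus N (fun j k => f (j, k)) (fun j k => g (j, k)))
           (fun c f => zsum2_scal_l N c (fun j k => f (j, k)))
           (fun f H => zsum2_nonneg N _ (fun j k => H (j, k)))
           (fun p => a (fst p) (snd p)) (fun p => b (fst p) (snd p))).
Qed.

(* Instances of Coquelicot's generic lemmas stated with [Rplus] and [Rmult], so that [apply]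
   unifies with real integrands. *)
Lemma is_RInt_Rplus (f g : R -> R) (a b I J : R) : is_RInt f a b I -> is_RInt g a b J ->
  is_RInt (fun x => f x + g x) a b (I + J).
Proof. exact (is_RInt_plus f g a b I J). Qed.

Lemma is_RInt_Rscal (f : R -> R) (a b c I : R) : is_RInt f a b I ->
  is_RInt (fun x => c * f x) a b (c * I).
Proof. exact (is_RInt_scal f a b c I). Qed.

Lemma is_RInt_ext_all (f g : R -> R) (a b I : R) :
  (forall x, f x = g x) -> is_RInt f a b I -> is_RInt g a b I.
Proof. intros H. apply is_RInt_ext. auto. Qed.

Lemma is_RInt_eq_value (f : R -> R) (a b I J : R) : I = J -> is_RInt f a b I -> is_RInt f a b J.
Proof. intros ->; auto. Qed.

Lemma is_RInt_Rconst (a b c : R) : is_RInt (fun _ => c) a b ((b - a) * c).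
Proof. exact (is_RInt_const a b c). Qed.

Lemma is_RInt_fsum n (F : nat -> R -> R) (I : nat -> R) a b :
  (forall i, (i < n)%nat -> is_RInt (F i) a b (I i)) ->
  is_RInt (fun x => fsum n (fun i => F i x)) a b (fsum n I).
Proof.
  induction n as [|n IH]; simpl; intros H.
  - apply (is_RInt_eq_value _ _ _ ((b - a) * 0)); [ring|apply is_RInt_Rconst].
  - apply is_RInt_Rplus; [apply IH; intros|]; apply H; lia.
Qed.

Lemma is_RInt_zsum N (F : Z -> R -> R) (I : Z -> R) a b :
  (forall j, is_RInt (F j) a b (I j)) ->
  is_RInt (fun x => zsum N (fun j => F j x)) a b (zsum N I).
Proof.
  intros H. apply is_RInt_Rplus; [apply H|].
  apply (is_RInt_fsum N (fun i x => F (Z.of_nat (S i)) x + F (- Z.of_nat (S i))%Z x)).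
  intros; apply is_RInt_Rplus; apply H.
Qed.

Lemma is_RInt_zsum2 N (F : Z -> Z -> R -> R) (I : Z -> Z -> R) a b :
  (forall j k, is_RInt (F j k) a b (I j k)) ->
  is_RInt (fun x => zsum2 N (fun j k => F j k x)) a b (zsum2 N I).
Proof.
  intros H. apply (is_RInt_zsum N (fun j x => zsum N (fun k => F j k x))).
  intros j. apply is_RInt_zsum. auto.
Qed.

Lemma is_RInt_cos_int n :
  is_RInt (fun x => cos (IZR n * x)) (- PI) PI (if Z.eq_dec n 0 then 2 * PI else 0).
Proof.
  destruct Z.eq_dec as [->|Hn0].
  - apply (is_RInt_ext_all (fun _ => 1)); [intros; rewrite Rmult_0_l, cos_0; auto|].
    apply (is_RInt_eq_value _ _ _ ((PI - - PI) * 1)); [ring|apply is_RInt_Rconst].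
  - assert (Hn : IZR n <> 0) by (apply not_0_IZR; auto).
    assert (HnPI : sin (IZR n * PI) = 0) by (apply sin_eq_0_1; exists n; auto).
    eapply is_RInt_eq_value; [|apply (is_RInt_derive (fun x => sin (IZR n * x) / IZR n))].
    + unfold minus, plus, opp; simpl. rewrite Ropp_mult_distr_r_reverse, sin_neg, HnPI. field; auto.
    + intros x _. auto_derive; auto. field; auto.
    + intros x _. apply (ex_derive_continuous (fun x => cos (IZR n * x))). auto_derive; auto.
Qed.

Lemma is_RInt_sin_int n : is_RInt (fun x => sin (IZR n * x)) (- PI) PI 0.
Proof.
  destruct (Z.eq_dec n 0) as [->|Hn0].
  - apply (is_RInt_ext_all (fun _ => 0)); [intros; rewrite Rmult_0_l, sin_0; auto|].
    apply (is_RInt_eq_value _ _ _ ((PI - - PI) * 0)); [ring|apply is_RInt_Rconst].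
  - assert (Hn : IZR n <> 0) by (apply not_0_IZR; auto).
    eapply is_RInt_eq_value; [|apply (is_RInt_derive (fun x => - cos (IZR n * x) / IZR n))].
    + unfold minus, plus, opp; simpl. rewrite Ropp_mult_distr_r_reverse, cos_neg. field; auto.
    + intros x _. auto_derive; auto. field; auto.
    + intros x _. apply (ex_derive_continuous (fun x => sin (IZR n * x))). auto_derive; auto.
Qed.

Definition expi (n : Z) (x : R) : C := (cos (IZR n * x), sin (IZR n * x)).

Lemma expi_add a b x : Cmult (expi a x) (expi b x) = expi (a + b) x.
Proof.
  unfold expi, Cmult; simpl. rewrite plus_IZR, Rmult_plus_distr_r, cos_plus, sin_plus.
  f_equal; ring.
Qed.

Lemma expi_opp a x : expi (- a) x = Cconj (expi a x).
Proof.
  unfold expi, Cconj; simpl. rewrite opp_IZR, Ropp_mult_distr_l_reverse, cos_neg, sin_neg. auto.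
Qed.

Lemma is_RInt_Re_expi (z : C) n : is_RInt (fun x => Re (Cmult z (expi n x))) (- PI) PI
  (if Z.eq_dec n 0 then 2 * PI * Re z else 0).
Proof.
  apply (is_RInt_ext_all (fun x => Re z * cos (IZR n * x) + (- Im z) * sin (IZR n * x))).
  { intros x; unfold expi, Cmult, Re, Im; simpl. ring. }
  eapply is_RInt_eq_value;
    [|apply is_RInt_Rplus; apply is_RInt_Rscal; [apply is_RInt_cos_int|apply is_RInt_sin_int]].
  destruct Z.eq_dec; ring.
Qed.

Lemma is_RInt_Im_expi (z : C) n : is_RInt (fun x => Im (Cmult z (expi n x))) (- PI) PI
  (if Z.eq_dec n 0 then 2 * PI * Im z else 0).
Proof.
  apply (is_RInt_ext_all (fun x => Im z * cos (IZR n * x) + Re z * sin (IZR n * x))).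
  { intros x; unfold expi, Cmult, Re, Im; simpl. ring. }
  eapply is_RInt_eq_value;
    [|apply is_RInt_Rplus; apply is_RInt_Rscal; [apply is_RInt_cos_int|apply is_RInt_sin_int]].
  destruct Z.eq_dec; ring.
Qed.

Ltac C_components := unfold Ci, RtoC, Cminus, Copp, Cplus, Cmult, Cconj, Re, Im; cbn [fst snd].

(* [Re (sum_{|j| <= N} c_j e^{ijx})]; for hermitian [c] the sum is already real. *)
Definition trig_poly N (c : Z -> C) (x : R) : R := zsum N (fun j => Re (Cmult (c j) (expi j x))).
Definition hermitian (c : Z -> C) := forall j, c (- j)%Z = Cconj (c j).
Definition supported N (c : Z -> C) := forall j, (Z.of_nat N < Z.abs j)%Z -> c j = 0%C.

Lemma trig_poly_im_zero N c x : hermitian c -> zsum N (fun j => Im (Cmult (c j) (expi j x))) = 0.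
Proof.
  intros H.
  assert (Hneg : zsum N (fun j => Im (Cmult (c j) (expi j x))) =
                 zsum N (fun j => - Im (Cmult (c j) (expi j x)))).
  { rewrite <- zsum_opp_index. apply zsum_ext. intros j _.
    rewrite H, expi_opp. unfold Cconj, Cmult, Im; simpl. ring. }
  rewrite (zsum_ext N (fun j => - _) (fun j => (-1) * Im (Cmult (c j) (expi j x)))) in Hneg
    by (intros; ring).
  rewrite zsum_scal_l in Hneg. lra.
Qed.

Lemma trig_poly_mul_cos N c k x : hermitian c ->
  trig_poly N c x * cos (IZR k * x) = zsum N (fun j => Re (Cmult (c j) (expi (j - k) x))).
Proof.
  intros H. unfold trig_poly.
  replace (zsum N (fun j => Re (Cmult (c j) (expi j x))) * cos (IZR k * x))
    with (zsum N (fun j => Re (Cmult (c j) (expi j x))) * cos (IZR k * x)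
          + zsum N (fun j => Im (Cmult (c j) (expi j x))) * sin (IZR k * x))
    by (rewrite trig_poly_im_zero by auto; ring).
  rewrite !zsum_scal_r, <- zsum_plus. apply zsum_ext. intros j _.
  unfold Z.sub. rewrite <- expi_add, expi_opp. unfold expi, Cconj, Cmult, Re, Im; simpl. ring.
Qed.

Lemma trig_poly_mul_sin N c k x : hermitian c ->
  trig_poly N c x * sin (IZR k * x) = - zsum N (fun j => Im (Cmult (c j) (expi (j - k) x))).
Proof.
  intros H. unfold trig_poly.
  replace (zsum N (fun j => Re (Cmult (c j) (expi j x))) * sin (IZR k * x))
    with (zsum N (fun j => Re (Cmult (c j) (expi j x))) * sin (IZR k * x)
          - zsum N (fun j => Im (Cmult (c j) (expi j x))) * cos (IZR k * x))
    by (rewrite trig_poly_im_zero by auto; ring).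
  rewrite !zsum_scal_r, <- zsum_minus.
  transitivity (zsum N (fun j => (-1) * Im (Cmult (c j) (expi (j - k) x))));
    [|rewrite zsum_scal_l; ring].
  apply zsum_ext. intros j _.
  unfold Z.sub. rewrite <- expi_add, expi_opp. unfold expi, Cconj, Cmult, Re, Im; simpl. ring.
Qed.

Lemma is_RInt_trig_poly_cos N c k : hermitian c -> supported N c ->
  is_RInt (fun x => trig_poly N c x * cos (IZR k * x)) (- PI) PI (2 * PI * Re (c k)).
Proof.
  intros Hh Hs. eapply is_RInt_ext_all; [intros x; symmetry; apply trig_poly_mul_cos; auto|].
  eapply is_RInt_eq_value; [|apply is_RInt_zsum; intros j; apply is_RInt_Re_expi].
  rewrite (zsum_ext N _ (fun j => 2 * PI * (if Z.eq_dec j k then Re (c j) else 0)))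
    by (intros j _; destruct (Z.eq_dec (j - k) 0), (Z.eq_dec j k); try lia; subst; ring).
  rewrite zsum_scal_l, zsum_indicator.
  destruct Z_le_dec; [|rewrite Hs by lia; simpl]; ring.
Qed.

Lemma is_RInt_trig_poly_sin N c k : hermitian c -> supported N c ->
  is_RInt (fun x => trig_poly N c x * sin (IZR k * x)) (- PI) PI (- (2 * PI * Im (c k))).
Proof.
  intros Hh Hs. eapply is_RInt_ext_all; [intros x; symmetry; apply trig_poly_mul_sin; auto|].
  apply (is_RInt_ext_all (fun x => (-1) * zsum N (fun j => Im (Cmult (c j) (expi (j - k) x)))));
    [intros; ring|].
  eapply is_RInt_eq_value; [|apply is_RInt_Rscal, is_RInt_zsum; intros j; apply is_RInt_Im_expi].
  rewrite (zsum_ext N _ (fun j => 2 * PI * (if Z.eq_dec j k then Im (c j) else 0)))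
    by (intros j _; destruct (Z.eq_dec (j - k) 0), (Z.eq_dec j k); try lia; subst; ring).
  rewrite zsum_scal_l, zsum_indicator.
  destruct Z_le_dec; [|rewrite Hs by lia; simpl]; ring.
Qed.

Definition fourier (f : R -> R) (k : Z) : C := (hatRe f k, hatIm f k).

Lemma hatRe_ext f g k : (forall x, f x = g x) -> hatRe f k = hatRe g k.
Proof. intros H. unfold hatRe. f_equal. apply RInt_ext. intros; rewrite H; auto. Qed.

Lemma hatIm_ext f g k : (forall x, f x = g x) -> hatIm f k = hatIm g k.
Proof. intros H. unfold hatIm. do 2 f_equal. apply RInt_ext. intros; rewrite H; auto. Qed.

Lemma fourier_ext f g k : (forall x, f x = g x) -> fourier f k = fourier g k.
Proof. intros H. unfold fourier. rewrite (hatRe_ext f g), (hatIm_ext f g); auto. Qed.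

Definition represents N (c : Z -> C) (f : R -> R) : Prop :=
  hermitian c /\ supported N c /\ forall x, f x = trig_poly N c x.

Lemma represents_ext N c f g : represents N c f -> (forall x, g x = f x) -> represents N c g.
Proof. intros (Hh & Hs & Hf) H. split; [|split]; auto. intros x. rewrite H. auto. Qed.

Lemma fourier_represents N c f k : represents N c f -> fourier f k = c k.
Proof.
  intros (Hh & Hs & Hf). unfold fourier.
  rewrite (hatRe_ext f (trig_poly N c)), (hatIm_ext f (trig_poly N c)) by auto.
  unfold hatRe, hatIm.
  rewrite (is_RInt_unique _ _ _ _ (is_RInt_trig_poly_cos N c k Hh Hs)),
    (is_RInt_unique _ _ _ _ (is_RInt_trig_poly_sin N c k Hh Hs)).
  pose proof PI_RGT_0. destruct (c k) as [p q]. unfold Re, Im; simpl. f_equal; field; lra.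
Qed.

(* Coefficients of [a_0 + sum_{k=1}^N (a_k cos kx + b_k sin kx)]. *)
Definition coef_cos_sin N (a b : nat -> R) (j : Z) : C :=
  if Z.eq_dec j 0 then (a 0%nat, 0)
  else if Z_le_dec (Z.abs j) (Z.of_nat N)
       then (a (Z.to_nat (Z.abs j)) / 2, - IZR (Z.sgn j) * b (Z.to_nat (Z.abs j)) / 2)
       else 0%C.

Lemma coef_cos_sin_hermitian N a b : hermitian (coef_cos_sin N a b).
Proof.
  intros j. unfold coef_cos_sin, Cconj. simpl.
  rewrite Z.abs_opp, Z.sgn_opp, opp_IZR.
  destruct (Z.eq_dec (- j) 0), (Z.eq_dec j 0); try lia.
  - subst; simpl. f_equal. ring.
  - destruct Z_le_dec; unfold RtoC; simpl; f_equal; unfold Rdiv; ring.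
Qed.

Lemma coef_cos_sin_supported N a b : supported N (coef_cos_sin N a b).
Proof. intros j Hj. unfold coef_cos_sin. destruct Z.eq_dec; [lia|]. destruct Z_le_dec; [lia|auto]. Qed.

Lemma sum_cos_sin_trig_poly N a b x :
  sum_f_R0 (fun k => a k * cos (INR k * x) + b k * sin (INR k * x)) N =
  trig_poly N (coef_cos_sin N a b) x.
Proof.
  rewrite sum_f_R0_fsum, fsum_shift. unfold trig_poly, zsum. f_equal.
  - unfold coef_cos_sin, expi, Cmult, Re; simpl. rewrite !Rmult_0_l, cos_0, sin_0. ring.
  - apply fsum_ext. intros i Hi. unfold coef_cos_sin.
    destruct (Z.eq_dec (Z.of_nat (S i)) 0); [lia|]. destruct (Z.eq_dec (- Z.of_nat (S i)) 0); [lia|].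
    destruct (Z_le_dec (Z.abs (Z.of_nat (S i))) (Z.of_nat N)); [|lia].
    destruct (Z_le_dec (Z.abs (- Z.of_nat (S i))) (Z.of_nat N)); [|lia].
    rewrite Z.abs_opp, Z.sgn_opp, Z.abs_eq, Nat2Z.id, opp_IZR, expi_opp by lia.
    replace (Z.sgn (Z.of_nat (S i))) with 1%Z by reflexivity.
    unfold expi, Cconj, Cmult, Re, Im. rewrite <- INR_IZR_INZ. cbn [fst snd]. field.
Qed.

Lemma inVN_represents N f : inVN N f -> represents N (fourier f) f.
Proof.
  intros [a [b Hf]].
  assert (Hrep : represents N (coef_cos_sin N a b) f).
  { split; [|split].
    - apply coef_cos_sin_hermitian.
    - apply coef_cos_sin_supported.
    - intros x. rewrite Hf. apply sum_cos_sin_trig_poly. }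
  assert (Hc : forall k, fourier f k = coef_cos_sin N a b k)
    by (intros k; apply (fourier_represents N), Hrep).
  destruct Hrep as (Hh & Hs & Hf').
  split; [|split].
  - intros j. rewrite !Hc. apply Hh.
  - intros j Hj. rewrite Hc. apply Hs; auto.
  - intros x. rewrite Hf'. apply zsum_ext. intros; rewrite Hc; auto.
Qed.

Lemma trig_poly_inVN N c : inVN N (trig_poly N c).
Proof.
  exists (fun k => if Nat.eq_dec k 0 then Re (c 0%Z) else Re (c (Z.of_nat k)) + Re (c (- Z.of_nat k)%Z)).
  exists (fun k => if Nat.eq_dec k 0 then 0 else - Im (c (Z.of_nat k)) + Im (c (- Z.of_nat k)%Z)).
  intros x. rewrite sum_f_R0_fsum, fsum_shift. unfold trig_poly, zsum. f_equal.
  - unfold expi, Cmult, Re, Im; simpl. rewrite !Rmult_0_l, cos_0, sin_0. ring.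
  - apply fsum_ext. intros i Hi. simpl (Nat.eq_dec (S i) 0). rewrite expi_opp, INR_IZR_INZ.
    unfold expi, Cconj, Cmult, Re, Im; cbn [fst snd]. ring.
Qed.

Definition coef_deriv (c : Z -> C) (j : Z) : C := (Ci * RtoC (IZR j) * c j)%C.

Lemma coef_deriv_hermitian c : hermitian c -> hermitian (coef_deriv c).
Proof.
  intros H j. unfold coef_deriv. rewrite H, opp_IZR. C_components. f_equal; ring.
Qed.

Lemma coef_deriv_supported N c : supported N c -> supported N (coef_deriv c).
Proof. intros H j Hj. unfold coef_deriv. rewrite H by auto. C_components. f_equal; ring. Qed.

Lemma is_derive_zsum N (F : Z -> R -> R) (F' : Z -> R) x :
  (forall j, is_derive (F j) x (F' j)) ->
  is_derive (fun y => zsum N (fun j => F j y)) x (zsum N F').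
Proof.
  intros H.
  apply (is_derive_plus (F 0%Z)
           (fun y => fsum N (fun i => F (Z.of_nat (S i)) y + F (- Z.of_nat (S i))%Z y))); auto.
  induction N as [|N IH]; cbn [fsum]; [apply (is_derive_const 0)|].
  apply (is_derive_plus (fun y => fsum N (fun i => F (Z.of_nat (S i)) y + F (- Z.of_nat (S i))%Z y))
           (fun y => F (Z.of_nat (S N)) y + F (- Z.of_nat (S N))%Z y)); auto.
  apply (is_derive_plus (F (Z.of_nat (S N))) (F (- Z.of_nat (S N))%Z)); auto.
Qed.

Lemma represents_dx N c f : represents N c f -> represents N (coef_deriv c) (dx f).
Proof.
  intros (Hh & Hs & Hf). split; [|split].
  - apply coef_deriv_hermitian, Hh.
  - apply coef_deriv_supported, Hs.
  - intros x. unfold dx. rewrite (Derive_ext f (trig_poly N c)) by auto.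
    apply is_derive_unique, (is_derive_zsum N (fun j y => Re (Cmult (c j) (expi j y)))).
    intros j. unfold coef_deriv, expi. C_components. auto_derive; auto. ring.
Qed.

(* Coefficients of [D^al]; the guard avoids the junk value [Rpower 0 al = 1]. *)
Definition coef_frac (al : R) (e : Z -> C) (j : Z) : C :=
  if Z.eq_dec j 0 then 0%C else (RtoC (Rpower (IZR (Z.abs j)) al) * e j)%C.

Lemma coef_frac_hermitian al e : hermitian e -> hermitian (coef_frac al e).
Proof.
  intros H j. unfold coef_frac, Cconj. rewrite Z.abs_opp, H.
  destruct (Z.eq_dec (-j) 0), (Z.eq_dec j 0); try lia; C_components; f_equal; ring.
Qed.

Lemma coef_frac_supported N al e : supported N e -> supported N (coef_frac al e).
Proof.
  intros H j Hj. unfold coef_frac. rewrite H by auto.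
  destruct Z.eq_dec; auto. C_components. f_equal; ring.
Qed.

Lemma represents_Dalpha N al c f : represents N c f -> represents N (coef_frac al c) (Dalpha al f).
Proof.
  intros Hrep. pose proof Hrep as (Hh & Hs & Hf). split; [|split].
  - apply coef_frac_hermitian, Hh.
  - apply coef_frac_supported, Hs.
  - intros x. unfold Dalpha.
    assert (Hc : forall k, hatRe f k = Re (c k) /\ hatIm f k = Im (c k)).
    { intros k. rewrite <- (fourier_represents N c f k Hrep). split; reflexivity. }
    rewrite (Series_fsum _ N).
    2:{ intros k Hk. destruct (Hc (Z.of_nat (S k))) as [-> ->]. rewrite Hs by lia. simpl; ring. }
    unfold trig_poly, zsum, coef_frac at 1. destruct (Z.eq_dec 0 0); [|lia].
    simpl Re at 1. rewrite !Rmult_0_l, Rminus_0_r, Rplus_0_l.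
    apply fsum_ext. intros i Hi. destruct (Hc (Z.of_nat (S i))) as [-> ->].
    unfold coef_frac. destruct (Z.eq_dec (Z.of_nat (S i)) 0); [lia|].
    destruct (Z.eq_dec (- Z.of_nat (S i)) 0); [lia|].
    rewrite Z.abs_opp, Hh, expi_opp, Z.abs_eq, INR_IZR_INZ by lia.
    unfold expi. C_components. ring.
Qed.

Definition clin (a : R) (c : Z -> C) (b : R) (d : Z -> C) (j : Z) : C := (a * c j + b * d j)%C.

Lemma represents_clin N a c f b d g :
  represents N c f -> represents N d g -> represents N (clin a c b d) (fun x => a * f x + b * g x).
Proof.
  intros (Hhc & Hsc & Hf) (Hhd & Hsd & Hg). split; [|split].
  - intros j. unfold clin. rewrite Hhc, Hhd. C_components. f_equal; ring.
  - intros j Hj. unfold clin. rewrite Hsc, Hsd by auto. C_components. f_equal; ring.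
  - intros x. rewrite Hf, Hg. unfold trig_poly.
    rewrite <- !zsum_scal_l, <- zsum_plus. apply zsum_ext. intros j _. unfold clin. C_components. ring.
Qed.

Definition sweight (s : R) (j : Z) : R := Rpower (1 + IZR j ^ 2) s.

Lemma sweight_pos s j : 0 < sweight s j.
Proof. apply exp_pos. Qed.

Lemma sweight_ge1 s j : 0 <= s -> 1 <= sweight s j.
Proof.
  intros Hs. unfold sweight. apply Rle_trans with (Rpower (1 + IZR j ^ 2) 0).
  - rewrite Rpower_O; nra.
  - apply Rle_Rpower; nra.
Qed.

Definition wnorm N s (a : Z -> R) : R := sqrt (zsum N (fun j => sweight s j * a j ^ 2)).

Definition cnorm N s (c : Z -> C) : R := wnorm N s (fun j => Cmod (c j)).

Lemma hnorm_represents N s c f : represents N c f -> hnorm s f = cnorm N s c.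
Proof.
  intros Hrep. pose proof Hrep as (Hh & Hs & _).
  assert (Hsq : forall k, hatsq f k = Cmod (c k) ^ 2).
  { intros k. rewrite Cmod2_alt. unfold hatsq.
    rewrite <- (fourier_represents N c f k Hrep). reflexivity. }
  unfold hnorm, cnorm, wnorm. f_equal. rewrite (Series_fsum _ N).
  2:{ intros k Hk. rewrite !Hsq, (Hs (Z.of_nat (S k))), (Hs (- Z.of_nat (S k))%Z), Cmod_0 by lia.
      ring. }
  unfold zsum. rewrite !Hsq.
  replace (sweight s 0) with 1 by (unfold sweight, Rpower; replace (1 + IZR 0 ^ 2) with 1
                                     by (simpl; ring); rewrite ln_1, Rmult_0_r, exp_0; reflexivity).
  rewrite Rmult_1_l. f_equal.
  apply fsum_ext. intros i Hi. rewrite !Hsq. unfold sweight. rewrite INR_IZR_INZ, opp_IZR.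
  replace ((- IZR (Z.of_nat (S i))) ^ 2) with (IZR (Z.of_nat (S i)) ^ 2) by ring. ring.
Qed.

(** * Products and the nonlinear term *)

Definition conv N (x y : Z -> C) (k : Z) : C :=
  (zsum2 N (fun j j' => if Z.eq_dec (j + j') k then Re (Cmult (x j) (y j')) else 0),
   zsum2 N (fun j j' => if Z.eq_dec (j + j') k then Im (Cmult (x j) (y j')) else 0)).

Lemma Re_conv N x y k :
  Re (conv N x y k) = zsum2 N (fun j j' => if Z.eq_dec (j + j') k then Re (Cmult (x j) (y j')) else 0).
Proof. reflexivity. Qed.

Lemma Im_conv N x y k :
  Im (conv N x y k) = zsum2 N (fun j j' => if Z.eq_dec (j + j') k then Im (Cmult (x j) (y j')) else 0).
Proof. reflexivity. Qed.

Lemma trig_poly_prod_mul_cos_sin N c d k x : hermitian c -> hermitian d ->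
  trig_poly N c x * trig_poly N d x * cos (IZR k * x) =
  zsum2 N (fun j j' => Re (Cmult (Cmult (c j) (d j')) (expi (j + j' - k) x))) /\
  trig_poly N c x * trig_poly N d x * sin (IZR k * x) =
  - zsum2 N (fun j j' => Im (Cmult (Cmult (c j) (d j')) (expi (j + j' - k) x))).
Proof.
  intros Hc Hd. unfold trig_poly.
  set (A := fun j => Cmult (c j) (expi j x)). set (B := fun j => Cmult (d j) (expi j x)).
  assert (Ic : zsum N (fun j => Im (A j)) = 0) by apply (trig_poly_im_zero N c x Hc).
  assert (Id : zsum N (fun j => Im (B j)) = 0) by apply (trig_poly_im_zero N d x Hd).
  assert (Hsplit : forall j j', Cmult (Cmult (c j) (d j')) (expi (j + j' - k) x) =
                               Cmult (Cmult (A j) (B j')) (expi (- k) x)).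
  { intros j j'. unfold A, B. unfold Z.sub.
    rewrite <- (expi_add (j + j')), <- (expi_add j j'). ring. }
  assert (Hk : expi (- k) x = (cos (IZR k * x), - sin (IZR k * x))).
  { rewrite expi_opp. reflexivity. }
  split.
  - rewrite (zsum2_ext N _ (fun j j' => cos (IZR k * x) * (Re (A j) * Re (B j'))
       + (- cos (IZR k * x)) * (Im (A j) * Im (B j'))
       + sin (IZR k * x) * (Re (A j) * Im (B j')) + sin (IZR k * x) * (Im (A j) * Re (B j')))).
    + rewrite !zsum2_plus, !zsum2_scal_l, !zsum2_prod, Ic, Id. unfold A, B. ring.
    + intros j j'. rewrite Hsplit, Hk. C_components. ring.
  - rewrite (zsum2_ext N _ (fun j j' => (- sin (IZR k * x)) * (Re (A j) * Re (B j'))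
       + sin (IZR k * x) * (Im (A j) * Im (B j'))
       + cos (IZR k * x) * (Re (A j) * Im (B j')) + cos (IZR k * x) * (Im (A j) * Re (B j')))).
    + rewrite !zsum2_plus, !zsum2_scal_l, !zsum2_prod, Ic, Id. unfold A, B. ring.
    + intros j j'. rewrite Hsplit, Hk. C_components. ring.
Qed.

Lemma is_RInt_trig_poly_prod_cos N c d k : hermitian c -> hermitian d ->
  is_RInt (fun x => trig_poly N c x * trig_poly N d x * cos (IZR k * x)) (- PI) PI
    (2 * PI * Re (conv N c d k)).
Proof.
  intros Hc Hd.
  eapply is_RInt_ext_all; [intros x; symmetry; apply (trig_poly_prod_mul_cos_sin N c d k x Hc Hd)|].
  eapply is_RInt_eq_value; [|apply is_RInt_zsum2; intros j j'; apply is_RInt_Re_expi].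
  rewrite Re_conv, <- zsum2_scal_l. apply zsum2_ext. intros j j'.
  destruct (Z.eq_dec (j + j' - k) 0), (Z.eq_dec (j + j') k); try lia; ring.
Qed.

Lemma is_RInt_trig_poly_prod_sin N c d k : hermitian c -> hermitian d ->
  is_RInt (fun x => trig_poly N c x * trig_poly N d x * sin (IZR k * x)) (- PI) PI
    (- (2 * PI * Im (conv N c d k))).
Proof.
  intros Hc Hd.
  eapply is_RInt_ext_all; [intros x; symmetry; apply (trig_poly_prod_mul_cos_sin N c d k x Hc Hd)|].
  apply (is_RInt_ext_all
           (fun x => (-1) * zsum2 N (fun j j' =>
                                      Im (Cmult (Cmult (c j) (d j')) (expi (j + j' - k) x)))));
    [intros; ring|].
  eapply is_RInt_eq_value; [|apply is_RInt_Rscal, is_RInt_zsum2; intros j j'; apply is_RInt_Im_expi].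
  rewrite Im_conv, <- zsum2_scal_l, <- zsum2_scal_l, <- zsum2_opp. apply zsum2_ext. intros j j'.
  destruct (Z.eq_dec (j + j' - k) 0), (Z.eq_dec (j + j') k); try lia; ring.
Qed.

(* [(u u_x)_k = (i k / 2) (u * u)_k] by symmetry of the convolution. *)
Lemma conv_coef_deriv N c k :
  Re (conv N c (coef_deriv c) k) = - (IZR k / 2 * Im (conv N c c k)) /\
  Im (conv N c (coef_deriv c) k) = IZR k / 2 * Re (conv N c c k).
Proof.
  rewrite !Re_conv, !Im_conv. split.
  - rewrite <- zsum2_antidiag_sym, <- zsum2_opp by (intros; C_components; ring).
    apply zsum2_ext. intros j j'. destruct Z.eq_dec; [|ring].
    unfold coef_deriv. C_components. ring.
  - rewrite <- zsum2_antidiag_sym by (intros; C_components; ring).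
    apply zsum2_ext. intros j j'. destruct Z.eq_dec; [|ring].
    unfold coef_deriv. C_components. ring.
Qed.

Definition coef_Bop N (m : Z -> C) (k : Z) : C := (RtoC 6 * conv N m (coef_deriv m) k)%C.

Lemma coef_Bop_conv N m k : coef_Bop N m k = (Ci * RtoC (3 * IZR k) * conv N m m k)%C.
Proof.
  unfold coef_Bop. destruct (conv_coef_deriv N m k) as [Hre Him]. revert Hre Him.
  generalize (conv N m (coef_deriv m) k) (conv N m m k). intros [p q] [p' q'].
  C_components. intros -> ->. f_equal; field.
Qed.

(** * The Galerkin equations in Fourier coefficients *)

(* [moments N g c]: [\int g e^{-ikx} = 2 PI c_k] for [|k| <= N], i.e. the [L^2] projection of [g]
   onto [V_N] has coefficients [c]. *)
Definition moments N (g : R -> R) (c : Z -> C) : Prop :=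
  forall k, (Z.abs k <= Z.of_nat N)%Z ->
    is_RInt (fun x => g x * cos (IZR k * x)) (- PI) PI (2 * PI * Re (c k)) /\
    is_RInt (fun x => g x * sin (IZR k * x)) (- PI) PI (- (2 * PI * Im (c k))).

Lemma represents_moments N c f : represents N c f -> moments N f c.
Proof.
  intros (Hh & Hs & Hf) k _. split.
  - apply (is_RInt_ext_all (fun x => trig_poly N c x * cos (IZR k * x)));
      [intros; rewrite Hf; auto|apply is_RInt_trig_poly_cos; auto].
  - apply (is_RInt_ext_all (fun x => trig_poly N c x * sin (IZR k * x)));
      [intros; rewrite Hf; auto|apply is_RInt_trig_poly_sin; auto].
Qed.

Lemma moments_mul_dx N m w :
  represents N m w -> moments N (fun x => w x * dx w x) (conv N m (coef_deriv m)).
Proof.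
  intros Hw. pose proof (represents_dx N m w Hw) as (Hh' & _ & Hdw).
  destruct Hw as (Hh & _ & Hf). intros k _. split.
  - apply (is_RInt_ext_all (fun x => trig_poly N m x * trig_poly N (coef_deriv m) x * cos (IZR k * x)));
      [intros; rewrite Hf, Hdw; auto|apply is_RInt_trig_poly_prod_cos; auto].
  - apply (is_RInt_ext_all (fun x => trig_poly N m x * trig_poly N (coef_deriv m) x * sin (IZR k * x)));
      [intros; rewrite Hf, Hdw; auto|apply is_RInt_trig_poly_prod_sin; auto].
Qed.

Lemma moments_Bop N m w : represents N m w -> moments N (Bop w) (coef_Bop N m).
Proof.
  intros Hw k Hk. destruct (moments_mul_dx N m w Hw k Hk) as [Hc Hs]. unfold Bop.
  split; [apply (is_RInt_ext_all (fun x => 6 * (w x * dx w x * cos (IZR k * x))))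
         |apply (is_RInt_ext_all (fun x => 6 * (w x * dx w x * sin (IZR k * x))))];
    try (intros; ring); eapply is_RInt_eq_value; try (apply is_RInt_Rscal; eassumption);
    unfold coef_Bop; C_components; ring.
Qed.

Lemma inner_moments_cos N g c k : moments N g c -> (Z.abs k <= Z.of_nat N)%Z ->
  inner g (fun x => cos (IZR k * x)) = 2 * PI * Re (c k).
Proof. intros Hg Hk. apply is_RInt_unique, (Hg k Hk). Qed.

Lemma inner_moments_sin N g c k : moments N g c -> (Z.abs k <= Z.of_nat N)%Z ->
  inner g (fun x => sin (IZR k * x)) = - (2 * PI * Im (c k)).
Proof. intros Hg Hk. apply is_RInt_unique, (Hg k Hk). Qed.

Lemma inner_inVN N g c phi a b : moments N g c ->
  (forall x, phi x = sum_f_R0 (fun k => a k * cos (INR k * x) + b k * sin (INR k * x)) N) ->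
  inner g phi = fsum (S N) (fun k => 2 * PI * (a k * Re (c (Z.of_nat k)) - b k * Im (c (Z.of_nat k)))).
Proof.
  intros Hg Hphi. apply is_RInt_unique.
  apply (is_RInt_ext_all (fun x => fsum (S N) (fun k =>
           a k * (g x * cos (IZR (Z.of_nat k) * x)) + b k * (g x * sin (IZR (Z.of_nat k) * x))))).
  { intros x. rewrite Hphi, sum_f_R0_fsum, Rmult_comm, fsum_scal_r.
    apply fsum_ext. intros i _. rewrite INR_IZR_INZ. ring. }
  eapply is_RInt_eq_value; [|apply is_RInt_fsum; intros i Hi;
    apply is_RInt_Rplus; apply is_RInt_Rscal; apply (Hg (Z.of_nat i)); lia].
  apply fsum_ext. intros; ring.
Qed.

Lemma cos_inVN N k : (Z.abs k <= Z.of_nat N)%Z -> inVN N (fun x => cos (IZR k * x)).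
Proof.
  intros Hk. exists (fun i => if Nat.eq_dec i (Z.abs_nat k) then 1 else 0), (fun _ => 0).
  intros x. rewrite sum_f_R0_fsum.
  rewrite (fsum_ext _ _ (fun i => if Nat.eq_dec i (Z.abs_nat k) then cos (INR i * x) else 0))
    by (intros i _; destruct Nat.eq_dec; ring).
  rewrite fsum_indicator. destruct lt_dec; [|lia]. rewrite INR_IZR_INZ, Nat2Z.inj_abs_nat.
  destruct (Z.abs_spec k) as [[_ ->]|[_ ->]]; auto.
  rewrite opp_IZR, Ropp_mult_distr_l_reverse, cos_neg; auto.
Qed.

Lemma sin_inVN N k : (Z.abs k <= Z.of_nat N)%Z -> inVN N (fun x => sin (IZR k * x)).
Proof.
  intros Hk. exists (fun _ => 0), (fun i => if Nat.eq_dec i (Z.abs_nat k) then IZR (Z.sgn k) else 0).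
  intros x. rewrite sum_f_R0_fsum.
  rewrite (fsum_ext _ _ (fun i => if Nat.eq_dec i (Z.abs_nat k)
                                  then IZR (Z.sgn k) * sin (INR i * x) else 0))
    by (intros i _; destruct Nat.eq_dec; ring).
  rewrite fsum_indicator. destruct lt_dec; [|lia]. rewrite INR_IZR_INZ, Nat2Z.inj_abs_nat.
  destruct (Z.abs_spec k) as [[H0 ->]|[H0 ->]].
  - destruct (Z.eq_dec k 0) as [->|]; [simpl; rewrite Rmult_0_l, sin_0; ring|].
    rewrite Z.sgn_pos by lia. simpl. ring.
  - rewrite Z.sgn_neg, opp_IZR, Ropp_mult_distr_l_reverse, sin_neg by lia. simpl. ring.
Qed.

(* The dispersive symbol: [D^al (e^{ikx})_x = i disp al k e^{ikx}]. *)
Definition disp (al : R) (k : Z) : R := Rpower (IZR (Z.abs k)) al * IZR k.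

Lemma coef_frac_deriv al c k : coef_frac al (coef_deriv c) k = (Ci * RtoC (disp al k) * c k)%C.
Proof.
  unfold coef_frac, coef_deriv, disp. destruct Z.eq_dec as [->|]; C_components; f_equal; ring.
Qed.

(* One Crank–Nicolson step for a single Fourier mode, [t] being the dispersive phase. *)
Definition coef_step (t dt : R) (U V B : C) : Prop := V = (U - RtoC dt * B + Ci * RtoC t * (U + V))%C.

Lemma coef_step_test t dt a b U V B : coef_step t dt U V B ->
  a * Re V - b * Im V =
  a * Re U - b * Im U - dt * (a * Re B - b * Im B) - t * (a * (Im U + Im V) + b * (Re U + Re V)).
Proof. unfold coef_step. intros H. rewrite H at 1 2. C_components. ring. Qed.

Section GalerkinCoefficients.

Variables (N : nat) (al eps dt : R).

Let t k := / 2 * eps ^ 2 * dt * disp al k.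

Lemma iter_step_coef U0 vl vl1 cU cV cV1 :
  represents N cU U0 -> represents N cV vl -> represents N cV1 vl1 ->
  iter_step N al eps dt U0 vl vl1 ->
  forall k, (Z.abs k <= Z.of_nat N)%Z ->
  coef_step (t k) dt (cU k) (cV1 k) (coef_Bop N (clin (/ 2) cU (/ 2) cV) k).
Proof.
  intros HU Hv Hv1 Hit k Hk.
  assert (Hmid : represents N (clin (/ 2) cU (/ 2) cV) (fun x => (U0 x + vl x) / 2))
    by (eapply represents_ext; [apply represents_clin; eauto|intros; simpl; field]).
  assert (Hsum : represents N (clin 1 cU 1 cV1) (fun x => U0 x + vl1 x))
    by (eapply represents_ext; [apply represents_clin; eauto|intros; simpl; ring]).
  pose proof (represents_moments _ _ _ (represents_Dalpha N al _ _ (represents_dx _ _ _ Hsum)))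
    as HD.
  pose proof (moments_Bop _ _ _ Hmid) as HB.
  pose proof (Hit _ (cos_inVN N k Hk)) as Ecos. pose proof (Hit _ (sin_inVN N k Hk)) as Esin.
  rewrite !(inner_moments_cos N _ _ k (represents_moments _ _ _ Hv1) Hk),
    !(inner_moments_cos N _ _ k (represents_moments _ _ _ HU) Hk),
    (inner_moments_cos N _ _ k HB Hk), (inner_moments_cos N _ _ k HD Hk) in Ecos.
  rewrite !(inner_moments_sin N _ _ k (represents_moments _ _ _ Hv1) Hk),
    !(inner_moments_sin N _ _ k (represents_moments _ _ _ HU) Hk),
    (inner_moments_sin N _ _ k HB Hk), (inner_moments_sin N _ _ k HD Hk) in Esin.
  rewrite coef_frac_deriv in Ecos, Esin.
  pose proof PI_RGT_0. unfold coef_step, t.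
  revert Ecos Esin. C_components. intros Ecos Esin.
  apply injective_projections; cbn [fst snd].
  - apply (Rmult_eq_reg_l (2 * PI)); [rewrite Ecos; unfold clin; C_components; ring|lra].
  - apply (Rmult_eq_reg_l (- (2 * PI))); [|lra].
    rewrite Ropp_mult_distr_l_reverse, Esin. unfold clin; C_components. ring.
Qed.

Lemma scheme_step_of_coef U0 cU L :
  represents N cU U0 -> hermitian L -> supported N L ->
  (forall k, (Z.abs k <= Z.of_nat N)%Z ->
     coef_step (t k) dt (cU k) (L k) (coef_Bop N (clin (/ 2) cU (/ 2) L) k)) ->
  scheme_step N al eps dt U0 (trig_poly N L).
Proof.
  intros HU HhL HsL Hst phi [a [b Hphi]].
  assert (HL : represents N L (trig_poly N L)) by (split; [|split]; auto).
  set (m := clin (/ 2) cU (/ 2) L).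
  assert (Hmid : represents N m (fun x => (U0 x + trig_poly N L x) / 2))
    by (eapply represents_ext; [apply represents_clin; eauto|intros; simpl; field]).
  rewrite (inner_inVN N _ _ phi a b (represents_moments _ _ _ HL) Hphi),
    (inner_inVN N _ _ phi a b (represents_moments _ _ _ HU) Hphi),
    (inner_inVN N _ _ phi a b (moments_mul_dx _ _ _ Hmid) Hphi),
    (inner_inVN N _ _ phi a b (represents_moments _ _ _
                                 (represents_Dalpha N al _ _ (represents_dx _ _ _ Hmid))) Hphi).
  rewrite fsum_lincomb. apply fsum_ext. intros i Hi.
  rewrite (coef_step_test _ _ _ _ _ _ _ (Hst (Z.of_nat i) ltac:(lia))), coef_frac_deriv.
  unfold coef_Bop, m, clin, t. C_components. ring.
Qed.

End GalerkinCoefficients.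

Lemma wnorm_nonneg N s a : 0 <= wnorm N s a.
Proof. apply sqrt_pos. Qed.

Lemma wnorm_sq_sum_nonneg N s a : 0 <= zsum N (fun j => sweight s j * a j ^ 2).
Proof. apply zsum_nonneg. intros j _. pose proof (sweight_pos s j). nra. Qed.

Lemma wnorm_ext N s (a b : Z -> R) :
  (forall k, (Z.abs k <= Z.of_nat N)%Z -> a k = b k) -> wnorm N s a = wnorm N s b.
Proof. intros H. unfold wnorm. f_equal. apply zsum_ext. intros k Hk. rewrite H; auto. Qed.

Lemma wnorm_mono N s (v a : Z -> R) :
  (forall k, (Z.abs k <= Z.of_nat N)%Z -> 0 <= v k <= a k) -> wnorm N s v <= wnorm N s a.
Proof.
  intros H. apply sqrt_le_1_alt, zsum_le. intros j Hj.
  pose proof (sweight_pos s j). destruct (H j Hj). apply Rmult_le_compat_l; [lra|].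
  apply pow_incr. auto.
Qed.

Lemma wnorm_scal N s c A : 0 <= c -> wnorm N s (fun j => c * A j) = c * wnorm N s A.
Proof.
  intros Hc. unfold wnorm. rewrite <- (sqrt_square c) at 1 by auto.
  rewrite <- sqrt_mult by (nra || apply wnorm_sq_sum_nonneg).
  f_equal. rewrite <- zsum_scal_l. apply zsum_ext; intros; ring.
Qed.

Lemma wnorm_triangle N s (v a b : Z -> R) :
  (forall k, (Z.abs k <= Z.of_nat N)%Z -> 0 <= v k <= a k + b k) ->
  wnorm N s v <= wnorm N s a + wnorm N s b.
Proof.
  intros Hv. unfold wnorm.
  set (A := zsum N (fun j => sweight s j * a j ^ 2)). set (B := zsum N (fun j => sweight s j * b j ^ 2)).
  assert (HA : 0 <= A) by apply wnorm_sq_sum_nonneg.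
  assert (HB : 0 <= B) by apply wnorm_sq_sum_nonneg.
  assert (Hw : forall j, sqrt (sweight s j) * sqrt (sweight s j) = sweight s j)
    by (intros; apply sqrt_sqrt; left; apply sweight_pos).
  assert (CS : zsum N (fun j => sweight s j * (a j * b j)) <= sqrt A * sqrt B).
  { pose proof (zsum_cauchy_schwarz N (fun j => sqrt (sweight s j) * a j)
                                      (fun j => sqrt (sweight s j) * b j)) as H.
    rewrite (zsum_ext N _ (fun j => sweight s j * (a j * b j))),
      (zsum_ext N (fun j => _ * a j * _) (fun j => sweight s j * a j ^ 2)),
      (zsum_ext N (fun j => _ * b j * _) (fun j => sweight s j * b j ^ 2)) in H
      by (intros j _; rewrite <- (Hw j) at 3; ring).
    fold A B in H. rewrite <- sqrt_mult by auto.
    set (X := zsum N (fun j => sweight s j * (a j * b j))) in *.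
    destruct (Rle_dec X 0); [apply Rle_trans with 0; auto; apply sqrt_pos|].
    rewrite <- (sqrt_square X) by lra. apply sqrt_le_1_alt. lra. }
  rewrite <- (sqrt_square (sqrt A + sqrt B)) by (pose proof (sqrt_pos A); pose proof (sqrt_pos B); lra).
  apply sqrt_le_1_alt.
  apply Rle_trans with (zsum N (fun j => sweight s j * a j ^ 2 + 2 * (sweight s j * (a j * b j))
                                         + sweight s j * b j ^ 2)).
  - apply zsum_le. intros j Hj. destruct (Hv j Hj). pose proof (sweight_pos s j).
    apply Rle_trans with (sweight s j * (a j + b j) ^ 2); [|right; ring].
    apply Rmult_le_compat_l; [lra|]. apply pow_incr; lra.
  - rewrite !zsum_plus, zsum_scal_l. fold A B.
    replace ((sqrt A + sqrt B) * (sqrt A + sqrt B))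
      with (sqrt A * sqrt A + 2 * (sqrt A * sqrt B) + sqrt B * sqrt B) by ring.
    rewrite !sqrt_sqrt by auto. lra.
Qed.

Lemma cnorm_nonneg N s c : 0 <= cnorm N s c.
Proof. apply wnorm_nonneg. Qed.

Lemma cnorm_le_wnorm_sum N s (v : Z -> C) (a b : Z -> R) :
  (forall k, (Z.abs k <= Z.of_nat N)%Z -> Cmod (v k) <= a k + b k) ->
  cnorm N s v <= wnorm N s a + wnorm N s b.
Proof.
  intros H. apply wnorm_triangle. intros k Hk. split; [apply Cmod_ge_0|auto].
Qed.

Lemma Cmod_le_cnorm N s c k : 0 <= s -> (Z.abs k <= Z.of_nat N)%Z -> Cmod (c k) <= cnorm N s c.
Proof.
  intros Hs Hk. unfold cnorm, wnorm. rewrite <- (sqrt_pow2 (Cmod (c k))) by apply Cmod_ge_0.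
  apply sqrt_le_1_alt. apply Rle_trans with (sweight s k * Cmod (c k) ^ 2).
  - pose proof (sweight_ge1 s k Hs). pose proof (pow2_ge_0 (Cmod (c k))). nra.
  - apply (zsum_term_le N (fun j => sweight s j * Cmod (c j) ^ 2)); auto.
    intros j. pose proof (sweight_pos s j). pose proof (pow2_ge_0 (Cmod (c j))). nra.
Qed.

(** * The algebra property of [H^s], [2 <= s <= 3] *)

Lemma Rdiv_le_cross a b c d : 0 < b -> 0 < d -> a * d <= c * b -> a / b <= c / d.
Proof.
  intros Hb Hd H. apply Rmult_le_reg_r with (b * d); [nra|].
  replace (a / b * (b * d)) with (a * d) by (field; lra).
  replace (c / d * (b * d)) with (c * b) by (field; lra). auto.
Qed.

Definition wratio (j j' : Z) : R := (1 + IZR (j + j') ^ 2) / ((1 + IZR j ^ 2) * (1 + IZR j' ^ 2)).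

Definition kprofile (u : R) : R := (1 + 4 * u ^ 2) / (1 + u ^ 2) ^ 2.

Lemma wratio_pos j j' : 0 < wratio j j'.
Proof.
  unfold wratio. pose proof (pow2_ge_0 (IZR (j + j'))).
  pose proof (pow2_ge_0 (IZR j)). pose proof (pow2_ge_0 (IZR j')).
  apply Rdiv_lt_0_compat; nra.
Qed.

(* For integers, [A B <= 0] or [A B >= 1], which rules out the bad range [0 < A B < 1]. *)
Lemma wratio_le j j' : wratio j j' <= 5 / 4.
Proof.
  unfold wratio. pose proof (pow2_ge_0 (IZR j)). pose proof (pow2_ge_0 (IZR j')).
  apply Rdiv_le_cross; [nra|lra|]. rewrite plus_IZR.
  set (A := IZR j). set (B := IZR j').
  assert (Hc : A * B <= 0 \/ 1 <= A * B).
  { unfold A, B. rewrite <- mult_IZR. destruct (Z_le_gt_dec (j * j') 0).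
    - left; apply IZR_le; auto.
    - right; apply IZR_le; lia. }
  assert (2 * (A * B) <= A ^ 2 + B ^ 2) by (pose proof (pow2_ge_0 (A - B)); nra).
  destruct Hc; nra.
Qed.

Lemma wratio_le_kprofile j j' : (Z.abs j <= Z.abs j')%Z -> wratio j j' <= kprofile (IZR (Z.abs j)).
Proof.
  intros H. unfold wratio, kprofile.
  assert (Hsq : forall i, IZR i ^ 2 = IZR (Z.abs i) ^ 2)
    by (intros i; rewrite abs_IZR, <- !Rsqr_pow2; apply Rsqr_abs).
  assert (Hsum : IZR (j + j') ^ 2 <= (IZR (Z.abs j) + IZR (Z.abs j')) ^ 2).
  { rewrite Hsq, <- plus_IZR. apply pow_incr. split; apply IZR_le; lia. }
  rewrite (Hsq j), (Hsq j').
  set (a := IZR (Z.abs j)) in *. set (x := IZR (Z.abs j')) in *.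
  assert (Ha : 0 <= a) by (apply IZR_le; lia).
  assert (Hx : a <= x) by (apply IZR_le; lia).
  assert (Hcase : a = 0 \/ 1 <= a).
  { unfold a. destruct (Z.eq_dec j 0) as [->|]; [left; auto|right; apply IZR_le; lia]. }
  assert (Hkey : (1 + (a + x) ^ 2) * (1 + a ^ 2) <= (1 + 4 * a ^ 2) * (1 + x ^ 2)).
  { destruct Hcase as [->|H1]; [nra|].
    assert (0 <= (x - a) * (4 * a ^ 2 + 3 * a * (x - a) - 2)) by (apply Rmult_le_pos; nra).
    nra. }
  pose proof (pow2_ge_0 a). pose proof (pow2_ge_0 x).
  apply Rdiv_le_cross; [nra|nra|].
  apply Rle_trans with ((1 + (a + x) ^ 2) * (1 + a ^ 2) ^ 2); [apply Rmult_le_compat_r; nra|].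
  replace ((1 + (a + x) ^ 2) * (1 + a ^ 2) ^ 2) with ((1 + (a + x) ^ 2) * (1 + a ^ 2) * (1 + a ^ 2))
    by ring.
  replace ((1 + 4 * a ^ 2) * ((1 + a ^ 2) * (1 + x ^ 2)))
    with ((1 + 4 * a ^ 2) * (1 + x ^ 2) * (1 + a ^ 2)) by ring.
  apply Rmult_le_compat_r; nra.
Qed.

Definition kprofile_sq (j : Z) : R := kprofile (IZR (Z.abs j)) ^ 2.

Lemma wratio_sq_le j j' : wratio j j' ^ 2 <= kprofile_sq j + kprofile_sq j'.
Proof.
  unfold kprofile_sq. pose proof (wratio_pos j j').
  pose proof (pow2_ge_0 (kprofile (IZR (Z.abs j)))). pose proof (pow2_ge_0 (kprofile (IZR (Z.abs j')))).
  destruct (Z_le_gt_dec (Z.abs j) (Z.abs j')) as [Hjj|Hjj].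
  - pose proof (wratio_le_kprofile j j' Hjj).
    assert (wratio j j' ^ 2 <= kprofile (IZR (Z.abs j)) ^ 2) by (apply pow_incr; lra). lra.
  - assert (Hsym : wratio j j' = wratio j' j)
      by (unfold wratio; rewrite Z.add_comm, (Rmult_comm (1 + IZR j ^ 2)); auto).
    pose proof (wratio_le_kprofile j' j ltac:(lia)).
    assert (wratio j j' ^ 2 <= kprofile (IZR (Z.abs j')) ^ 2) by (apply pow_incr; lra). lra.
Qed.

Lemma Rpower_le_sq r s : 0 < r <= 5 / 4 -> 2 <= s <= 3 -> Rpower r s <= 5 / 4 * r ^ 2.
Proof.
  intros Hr Hs. replace s with (INR 2 + (s - 2)) by (simpl; ring).
  rewrite Rpower_plus, Rpower_pow, (Rmult_comm (5 / 4)) by lra. apply Rmult_le_compat_l; [nra|].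
  destruct (Rle_dec r 1).
  - apply Rle_trans with (Rpower 1 (s - 2)); [apply Rle_Rpower_l; lra|].
    unfold Rpower. rewrite ln_1, Rmult_0_r, exp_0. lra.
  - apply Rle_trans with (Rpower r 1); [apply Rle_Rpower; lra|]. rewrite Rpower_1; lra.
Qed.

Lemma sweight_ratio_le j j' s : 2 <= s <= 3 ->
  sweight s (j + j') / (sweight s j * sweight s j') <= 5 / 4 * (kprofile_sq j + kprofile_sq j').
Proof.
  intros Hs. pose proof (pow2_ge_0 (IZR j)). pose proof (pow2_ge_0 (IZR j')).
  assert (Hsplit : sweight s (j + j') / (sweight s j * sweight s j') = Rpower (wratio j j') s).
  { unfold sweight, wratio.
    set (x := 1 + IZR (j + j') ^ 2). set (yz := (1 + IZR j ^ 2) * (1 + IZR j' ^ 2)).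
    assert (0 < x) by (unfold x; nra). assert (0 < yz) by (unfold yz; nra).
    rewrite Rpower_mult_distr by nra. fold yz.
    replace (Rpower x s) with (Rpower (x / yz) s * Rpower yz s)
      by (rewrite Rpower_mult_distr by (try apply Rdiv_lt_0_compat; lra); f_equal; field; lra).
    assert (0 < Rpower yz s) by apply exp_pos. field. lra. }
  rewrite Hsplit. pose proof (wratio_pos j j').
  apply Rle_trans with (5 / 4 * wratio j j' ^ 2).
  - apply Rpower_le_sq; auto. split; auto. apply wratio_le.
  - apply Rmult_le_compat_l; [lra|]. apply wratio_sq_le.
Qed.

Lemma kprofile_sq_le u : 2 <= u -> kprofile u ^ 2 <= / (u * (u - 1)).
Proof.
  intros H. unfold kprofile.
  assert (Hpoly : (1 + 4 * u ^ 2) ^ 2 * (u * (u - 1)) <= (1 + u ^ 2) ^ 4).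
  { set (t := u - 2). assert (0 <= t) by (unfold t; lra).
    replace u with (t + 2) by (unfold t; ring). ring_simplify.
    assert (0 <= t ^ 2) by nra. assert (0 <= t ^ 3) by (apply pow_le; lra).
    assert (0 <= t ^ 4) by (apply pow_le; lra). assert (0 <= t ^ 5) by (apply pow_le; lra).
    assert (0 <= t ^ 6) by (apply pow_le; lra). assert (0 <= t ^ 7) by (apply pow_le; lra).
    assert (0 <= t ^ 8) by (apply pow_le; lra). lra. }
  pose proof (pow2_ge_0 u).
  replace (((1 + 4 * u ^ 2) / (1 + u ^ 2) ^ 2) ^ 2) with ((1 + 4 * u ^ 2) ^ 2 / (1 + u ^ 2) ^ 4)
    by (field; nra).
  rewrite <- (Rmult_1_l (/ (u * (u - 1)))). apply Rdiv_le_cross; [apply pow_lt; nra|nra|lra].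
Qed.

(* Telescoping against [1 / (u (u - 1)) = 1 / (u - 1) - 1 / u]. *)
Lemma fsum_kprofile_sq n :
  (1 <= n)%nat -> fsum n (fun i => kprofile (INR (S i)) ^ 2) <= 41 / 16 - / INR n.
Proof.
  induction n as [|n IH]; intros Hn; [lia|].
  destruct n as [|n]; [simpl; unfold kprofile; simpl; lra|].
  cbn [fsum] in *. specialize (IH ltac:(lia)).
  assert (HI : 1 <= INR (S n)) by (apply (le_INR 1); lia).
  pose proof (kprofile_sq_le (INR (S (S n))) ltac:(rewrite S_INR; lra)) as Hk.
  rewrite (S_INR (S n)) in *. replace (INR (S n) + 1 - 1) with (INR (S n)) in Hk by ring.
  assert (/ INR (S n) - / (INR (S n) + 1) = / ((INR (S n) + 1) * INR (S n))) by (field; lra).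
  lra.
Qed.

Lemma zsum_kprofile_sq N : zsum N kprofile_sq <= 49 / 8.
Proof.
  unfold zsum. replace (kprofile_sq 0) with 1 by (unfold kprofile_sq, kprofile; simpl; field).
  rewrite (fsum_ext _ _ (fun i => 2 * kprofile (INR (S i)) ^ 2)).
  2:{ intros i _. unfold kprofile_sq. rewrite Z.abs_opp, Z.abs_eq, <- INR_IZR_INZ by lia. ring. }
  rewrite fsum_scal_l. destruct N as [|N]; [simpl; lra|].
  pose proof (fsum_kprofile_sq (S N) ltac:(lia)).
  assert (0 < / INR (S N)) by (apply Rinv_0_lt_compat, lt_0_INR; lia).
  lra.
Qed.

Lemma Cmod_pair_triangle p q r t : Cmod (p + q, r + t) <= Cmod (p, r) + Cmod (q, t).
Proof. exact (Cmod_triangle (p, r) (q, t)). Qed.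

Lemma Cmod_zsum N (F : Z -> C) :
  Cmod (zsum N (fun j => Re (F j)), zsum N (fun j => Im (F j))) <= zsum N (fun j => Cmod (F j)).
Proof.
  unfold zsum. eapply Rle_trans; [apply Cmod_pair_triangle|].
  apply Rplus_le_compat; [destruct (F 0%Z); apply Rle_refl|].
  induction N as [|N IH]; cbn [fsum].
  - right. exact Cmod_0.
  - eapply Rle_trans; [apply Cmod_pair_triangle|].
    apply Rplus_le_compat; auto.
    eapply Rle_trans; [|apply Cmod_triangle].
    destruct (F (Z.of_nat (S N))), (F (- Z.of_nat (S N))%Z). apply Rle_refl.
Qed.

Lemma Cmod_zsum2 N (F : Z -> Z -> C) :
  Cmod (zsum2 N (fun j k => Re (F j k)), zsum2 N (fun j k => Im (F j k))) <=
  zsum2 N (fun j k => Cmod (F j k)).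
Proof.
  eapply Rle_trans;
    [apply (Cmod_zsum N (fun j => (zsum N (fun k => Re (F j k)), zsum N (fun k => Im (F j k)))))|].
  apply zsum_le. intros j _. apply Cmod_zsum.
Qed.

Definition on_antidiag (k j j' : Z) (r : R) : R := if Z.eq_dec (j + j') k then r else 0.

Lemma Cmod_conv_le N x y k :
  Cmod (conv N x y k) <= zsum2 N (fun j j' => on_antidiag k j j' (Cmod (x j) * Cmod (y j'))).
Proof.
  set (F := fun j j' => if Z.eq_dec (j + j') k then Cmult (x j) (y j') else 0%C).
  replace (conv N x y k) with (zsum2 N (fun j j' => Re (F j j')), zsum2 N (fun j j' => Im (F j j'))).
  - eapply Rle_trans; [apply Cmod_zsum2|]. apply zsum2_le. intros j j'.
    unfold F, on_antidiag. destruct Z.eq_dec; [rewrite Cmod_mult|rewrite Cmod_0]; lra.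
  - unfold conv, F. f_equal; apply zsum2_ext; intros; destruct Z.eq_dec; auto.
Qed.

Lemma antidiag_cauchy_schwarz N s k X Y :
  zsum2 N (fun j j' => on_antidiag k j j' (X j * Y j')) ^ 2 <=
  zsum2 N (fun j j' => on_antidiag k j j' (/ (sweight s j * sweight s j'))) *
  zsum2 N (fun j j' => on_antidiag k j j' (sweight s j * sweight s j' * (X j ^ 2 * Y j' ^ 2))).
Proof.
  set (w := fun j j' => sweight s j * sweight s j').
  assert (Hw : forall j j', 0 < w j j') by (intros; apply Rmult_lt_0_compat; apply sweight_pos).
  pose proof (zsum2_cauchy_schwarz N (fun j j' => on_antidiag k j j' (/ sqrt (w j j')))
                (fun j j' => on_antidiag k j j' (sqrt (w j j') * (X j * Y j')))) as H.
  rewrite (zsum2_ext N _ (fun j j' => on_antidiag k j j' (X j * Y j'))),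
    (zsum2_ext N (fun j j' => on_antidiag k j j' (/ _) * _) (fun j j' => on_antidiag k j j' (/ w j j'))),
    (zsum2_ext N (fun j j' => on_antidiag k j j' (sqrt _ * _) * _)
                 (fun j j' => on_antidiag k j j' (w j j' * (X j ^ 2 * Y j' ^ 2)))) in H.
  - simpl. rewrite Rmult_1_r. exact H.
  - intros j j'. unfold on_antidiag. destruct Z.eq_dec; [|ring].
    transitivity (sqrt (w j j') * sqrt (w j j') * (X j ^ 2 * Y j' ^ 2)); [ring|].
    rewrite sqrt_sqrt; [ring|]. left; auto.
  - intros j j'. unfold on_antidiag. destruct Z.eq_dec; [|ring].
    rewrite <- Rinv_mult, sqrt_sqrt; [auto|]. left; auto.
  - intros j j'. unfold on_antidiag. destruct Z.eq_dec; [|ring].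
    pose proof (sqrt_lt_R0 _ (Hw j j')). field. lra.
Qed.

Lemma zsum2_antidiag_le N k (g : Z -> R) : (forall j, 0 <= g j) ->
  zsum2 N (fun j j' => on_antidiag k j j' (g j)) <= zsum N g.
Proof.
  intros Hg. apply zsum_le. intros j _.
  rewrite (zsum_ext N _ (fun j' => if Z.eq_dec j' (k - j) then g j else 0)).
  - apply zsum_indicator_le. auto.
  - intros j' _. unfold on_antidiag. destruct (Z.eq_dec (j + j') k), (Z.eq_dec j' (k - j)); auto; lia.
Qed.

Lemma conv_kernel_le N s k : 2 <= s <= 3 ->
  sweight s k * zsum2 N (fun j j' => on_antidiag k j j' (/ (sweight s j * sweight s j'))) <= 16.
Proof.
  intros Hs. rewrite <- zsum2_scal_l.
  assert (Hg : forall j, 0 <= kprofile_sq j) by (intros; apply pow2_ge_0).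
  apply Rle_trans with (zsum2 N (fun j j' => 5 / 4 * on_antidiag k j j' (kprofile_sq j)
                                          + 5 / 4 * on_antidiag k j j' (kprofile_sq j'))).
  - apply zsum2_le. intros j j'. unfold on_antidiag. destruct Z.eq_dec as [<-|]; [|lra].
    pose proof (sweight_ratio_le j j' s Hs). unfold Rdiv in *. lra.
  - rewrite zsum2_plus, !zsum2_scal_l.
    pose proof (zsum2_antidiag_le N k kprofile_sq Hg).
    assert (zsum2 N (fun j j' => on_antidiag k j j' (kprofile_sq j')) <= zsum N kprofile_sq).
    { rewrite zsum2_transpose, (zsum2_ext N _ (fun j j' => on_antidiag k j j' (kprofile_sq j))).
      - apply zsum2_antidiag_le, Hg.
      - intros j j'. unfold on_antidiag. rewrite Z.add_comm. auto. }
    pose proof (zsum_kprofile_sq N). lra.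
Qed.

Lemma conv_mode_le N s x y k : 2 <= s <= 3 ->
  sweight s k * Cmod (conv N x y k) ^ 2 <=
  16 * zsum2 N (fun j j' => on_antidiag k j j'
                              (sweight s j * sweight s j' * (Cmod (x j) ^ 2 * Cmod (y j') ^ 2))).
Proof.
  intros Hs. pose proof (sweight_pos s k).
  set (T := zsum2 N (fun j j' => on_antidiag k j j'
                                   (sweight s j * sweight s j' * (Cmod (x j) ^ 2 * Cmod (y j') ^ 2)))).
  assert (HT : 0 <= T).
  { apply zsum2_nonneg. intros j j'. unfold on_antidiag. destruct Z.eq_dec; [|lra].
    pose proof (sweight_pos s j). pose proof (sweight_pos s j').
    pose proof (pow2_ge_0 (Cmod (x j))). pose proof (pow2_ge_0 (Cmod (y j'))).
    apply Rmult_le_pos; apply Rmult_le_pos; lra. }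
  apply Rle_trans with
    (sweight s k * zsum2 N (fun j j' => on_antidiag k j j' (/ (sweight s j * sweight s j'))) * T).
  - rewrite Rmult_assoc. apply Rmult_le_compat_l; [lra|].
    eapply Rle_trans;
      [|apply (antidiag_cauchy_schwarz N s k (fun j => Cmod (x j)) (fun j => Cmod (y j)))].
    apply pow_incr. split; [apply Cmod_ge_0|apply Cmod_conv_le].
  - apply Rmult_le_compat_r; auto. apply conv_kernel_le; auto.
Qed.

Lemma cnorm_conv N s x y : 2 <= s <= 3 -> cnorm N s (conv N x y) <= 4 * cnorm N s x * cnorm N s y.
Proof.
  intros Hs. unfold cnorm, wnorm.
  set (T := fun j j' => sweight s j * sweight s j' * (Cmod (x j) ^ 2 * Cmod (y j') ^ 2)).
  set (A := zsum N (fun j => sweight s j * Cmod (x j) ^ 2)).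
  set (B := zsum N (fun j => sweight s j * Cmod (y j) ^ 2)).
  assert (HA : 0 <= A) by apply wnorm_sq_sum_nonneg. assert (HB : 0 <= B) by apply wnorm_sq_sum_nonneg.
  replace (4 * sqrt A * sqrt B) with (sqrt (16 * (A * B)))
    by (rewrite !sqrt_mult by nra; replace 16 with (4 * 4) by ring; rewrite sqrt_square; lra).
  apply sqrt_le_1_alt.
  apply Rle_trans with (zsum N (fun k => 16 * zsum2 N (fun j j' => on_antidiag k j j' (T j j')))).
  { apply zsum_le. intros k _. apply conv_mode_le, Hs. }
  rewrite zsum_scal_l. apply Rmult_le_compat_l; [lra|].
  replace (A * B) with (zsum2 N T)
    by (unfold A, B; rewrite <- zsum2_prod; apply zsum2_ext; intros; unfold T; ring).
  replace (zsum N (fun k => zsum2 N (fun j j' => on_antidiag k j j' (T j j'))))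
    with (zsum2 N (fun j j' => zsum N (fun k => on_antidiag k j j' (T j j'))))
    by (symmetry; unfold zsum2; rewrite zsum_swap; apply zsum_ext; intros; apply zsum_swap).
  apply zsum2_le. intros j j'.
  rewrite (zsum_ext N _ (fun k => if Z.eq_dec k (j + j') then T j j' else 0)).
  - apply zsum_indicator_le. unfold T. pose proof (sweight_pos s j). pose proof (sweight_pos s j').
    pose proof (pow2_ge_0 (Cmod (x j))). pose proof (pow2_ge_0 (Cmod (y j'))).
    apply Rmult_le_pos; apply Rmult_le_pos; lra.
  - intros k _. unfold on_antidiag. destruct (Z.eq_dec (j + j') k), (Z.eq_dec k (j + j')); auto; lia.
Qed.

Lemma Cmod_Ci_scal r z : Cmod (Ci * RtoC r * z)%C = Rabs r * Cmod z.
Proof.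
  rewrite !Cmod_mult, Cmod_R.
  replace (Cmod Ci) with 1
    by (unfold Cmod, Ci; cbn [fst snd]; replace (0 ^ 2 + 1 ^ 2) with 1 by ring; symmetry; apply sqrt_1).
  ring.
Qed.

Lemma Rabs_mode_le N k : (Z.abs k <= Z.of_nat N)%Z -> Rabs (3 * IZR k) <= 3 * INR N.
Proof.
  intros Hk. rewrite Rabs_mult, Rabs_right, <- abs_IZR, INR_IZR_INZ by lra.
  apply Rmult_le_compat_l; [lra|]. apply IZR_le. auto.
Qed.

Lemma cnorm_coef_Bop N s m : 2 <= s <= 3 -> cnorm N s (coef_Bop N m) <= 12 * INR N * cnorm N s m ^ 2.
Proof.
  intros Hs. pose proof (pos_INR N).
  apply Rle_trans with (wnorm N s (fun k => 3 * INR N * Cmod (conv N m m k))).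
  - apply wnorm_mono. intros k Hk. split; [apply Cmod_ge_0|].
    rewrite coef_Bop_conv, Cmod_Ci_scal.
    apply Rmult_le_compat_r; [apply Cmod_ge_0|apply Rabs_mode_le; auto].
  - rewrite wnorm_scal by lra. pose proof (cnorm_conv N s m m Hs).
    replace (12 * INR N * cnorm N s m ^ 2) with (3 * INR N * (4 * cnorm N s m * cnorm N s m)) by ring.
    apply Rmult_le_compat_l; [lra|auto].
Qed.

Lemma clin_diff_apply c d k : clin 1 c (-1) d k = (c k - d k)%C.
Proof. unfold clin. C_components. f_equal; ring. Qed.

Lemma conv_clin_diff N m m' k :
  clin 1 (conv N m m) (-1) (conv N m' m') k =
  (conv N (clin 1 m (-1) m') m k + conv N m' (clin 1 m (-1) m') k)%C.
Proof.
  assert (Hre : Re (conv N m m k) - Re (conv N m' m' k) =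
                Re (conv N (clin 1 m (-1) m') m k) + Re (conv N m' (clin 1 m (-1) m') k)).
  { rewrite !Re_conv, <- zsum2_minus, <- zsum2_plus. apply zsum2_ext. intros.
    destruct Z.eq_dec; [unfold clin; C_components|]; ring. }
  assert (Him : Im (conv N m m k) - Im (conv N m' m' k) =
                Im (conv N (clin 1 m (-1) m') m k) + Im (conv N m' (clin 1 m (-1) m') k)).
  { rewrite !Im_conv, <- zsum2_minus, <- zsum2_plus. apply zsum2_ext. intros.
    destruct Z.eq_dec; [unfold clin; C_components|]; ring. }
  rewrite clin_diff_apply. revert Hre Him.
  generalize (conv N m m k) (conv N m' m' k) (conv N (clin 1 m (-1) m') m k)
    (conv N m' (clin 1 m (-1) m') k).
  intros [a1 b1] [a2 b2] [a3 b3] [a4 b4]. C_components. intros Hre Him. f_equal; lra.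
Qed.

Lemma cnorm_coef_Bop_diff N s m m' : 2 <= s <= 3 ->
  cnorm N s (clin 1 (coef_Bop N m) (-1) (coef_Bop N m')) <=
  12 * INR N * cnorm N s (clin 1 m (-1) m') * (cnorm N s m + cnorm N s m').
Proof.
  intros Hs. pose proof (pos_INR N). set (d := clin 1 m (-1) m').
  eapply Rle_trans.
  - apply (cnorm_le_wnorm_sum N s _ (fun k => 3 * INR N * Cmod (conv N d m k))
                                     (fun k => 3 * INR N * Cmod (conv N m' d k))).
    intros k Hk.
    replace (clin 1 (coef_Bop N m) (-1) (coef_Bop N m') k)
      with (Ci * RtoC (3 * IZR k) * clin 1 (conv N m m) (-1) (conv N m' m') k)%C
      by (unfold clin; rewrite !coef_Bop_conv; ring).
    rewrite conv_clin_diff, Cmod_Ci_scal. fold d.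
    pose proof (Rabs_mode_le N k Hk). pose proof (Cmod_triangle (conv N d m k) (conv N m' d k)).
    pose proof (Cmod_ge_0 (conv N d m k + conv N m' d k)). pose proof (Rabs_pos (3 * IZR k)).
    nra.
  - rewrite !wnorm_scal by lra. fold (cnorm N s (conv N d m)) (cnorm N s (conv N m' d)).
    pose proof (cnorm_conv N s d m Hs). pose proof (cnorm_conv N s m' d Hs).
    pose proof (cnorm_nonneg N s d). pose proof (cnorm_nonneg N s m). pose proof (cnorm_nonneg N s m').
    nra.
Qed.

Lemma Cmod_one_plus_Ci t :
  Cmod (1 - Ci * RtoC t)%C = Cmod (1 + Ci * RtoC t)%C /\ 1 <= Cmod (1 + Ci * RtoC t)%C.
Proof.
  unfold Cmod. C_components. split; [f_equal; ring|].
  rewrite <- sqrt_1 at 1. apply sqrt_le_1_alt. nra.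
Qed.

Lemma coef_step_solve t dt U V B :
  coef_step t dt U V B -> ((1 - Ci * RtoC t) * V = (1 + Ci * RtoC t) * U - RtoC dt * B)%C.
Proof.
  unfold coef_step. intros H.
  transitivity (V - Ci * RtoC t * V)%C; [ring|]. rewrite H at 1. ring.
Qed.

(* The factor [1 - i t] has modulus at least one, so the dispersive term never amplifies. *)
Lemma coef_step_bound t dt U V B : 0 <= dt -> coef_step t dt U V B -> Cmod V <= Cmod U + dt * Cmod B.
Proof.
  intros Hdt H. destruct (Cmod_one_plus_Ci t) as [Hconj H1].
  pose proof (Cmod_ge_0 V). pose proof (Cmod_ge_0 U). pose proof (Cmod_ge_0 B).
  assert (Hle : Cmod (1 + Ci * RtoC t)%C * Cmod V <= Cmod (1 + Ci * RtoC t)%C * Cmod U + dt * Cmod B).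
  { rewrite <- Hconj at 1. rewrite <- !Cmod_mult, (coef_step_solve _ _ _ _ _ H).
    unfold Cminus. eapply Rle_trans; [apply Cmod_triangle|].
    rewrite Cmod_opp, (Cmod_mult (RtoC dt)), Cmod_R, Rabs_right by lra. lra. }
  assert (0 <= dt * Cmod B) by nra.
  apply Rmult_le_reg_l with (Cmod (1 + Ci * RtoC t)%C); [lra|]. nra.
Qed.

Lemma coef_step_diff t dt U V B V' B' : 0 <= dt ->
  coef_step t dt U V B -> coef_step t dt U V' B' -> Cmod (V - V')%C <= dt * Cmod (B - B')%C.
Proof.
  intros Hdt H H'. destruct (Cmod_one_plus_Ci t) as [Hconj H1].
  assert (E : ((1 - Ci * RtoC t) * (V - V') = - (RtoC dt * (B - B')))%C).
  { transitivity ((1 - Ci * RtoC t) * V - (1 - Ci * RtoC t) * V')%C; [ring|].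
    rewrite (coef_step_solve _ _ _ _ _ H), (coef_step_solve _ _ _ _ _ H'). ring. }
  apply (f_equal Cmod) in E. rewrite Cmod_opp, !Cmod_mult, Cmod_R, Rabs_right, Hconj in E by lra.
  pose proof (Cmod_ge_0 (V - V')%C). nra.
Qed.


Lemma cnorm_coef_step_le N s dt t cU V B : 0 <= dt ->
  (forall k, (Z.abs k <= Z.of_nat N)%Z -> coef_step (t k) dt (cU k) (V k) (B k)) ->
  cnorm N s V <= cnorm N s cU + dt * cnorm N s B.
Proof.
  intros Hdt Hst. unfold cnorm at 3. rewrite <- wnorm_scal by auto.
  apply cnorm_le_wnorm_sum. intros k Hk. eapply coef_step_bound; eauto.
Qed.

Lemma cnorm_coef_step_diff N s dt t cU V B V' B' : 0 <= dt ->
  (forall k, (Z.abs k <= Z.of_nat N)%Z -> coef_step (t k) dt (cU k) (V k) (B k)) ->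
  (forall k, (Z.abs k <= Z.of_nat N)%Z -> coef_step (t k) dt (cU k) (V' k) (B' k)) ->
  cnorm N s (clin 1 V (-1) V') <= dt * cnorm N s (clin 1 B (-1) B').
Proof.
  intros Hdt Hst Hst'. unfold cnorm. rewrite <- wnorm_scal by auto.
  apply wnorm_mono. intros k Hk. rewrite !clin_diff_apply.
  split; [apply Cmod_ge_0|]. eapply coef_step_diff; eauto.
Qed.

Lemma cnorm_mid N s c d : cnorm N s (clin (/ 2) c (/ 2) d) <= (cnorm N s c + cnorm N s d) / 2.
Proof.
  eapply Rle_trans;
    [apply (cnorm_le_wnorm_sum N s _ (fun k => / 2 * Cmod (c k)) (fun k => / 2 * Cmod (d k)))|].
  - intros k _. unfold clin. eapply Rle_trans; [apply Cmod_triangle|].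
    rewrite !Cmod_mult, Cmod_R, Rabs_right by lra. lra.
  - rewrite !wnorm_scal by lra. unfold cnorm. lra.
Qed.

Lemma cnorm_mid_diff N s U a b :
  cnorm N s (clin 1 (clin (/ 2) U (/ 2) a) (-1) (clin (/ 2) U (/ 2) b)) =
  cnorm N s (clin 1 a (-1) b) / 2.
Proof.
  unfold cnorm, Rdiv. rewrite Rmult_comm, <- wnorm_scal by lra. apply wnorm_ext. intros k _.
  rewrite !clin_diff_apply. unfold clin.
  replace (RtoC (/ 2) * U k + RtoC (/ 2) * a k - (RtoC (/ 2) * U k + RtoC (/ 2) * b k))%C
    with (RtoC (/ 2) * (a k - b k))%C by ring.
  rewrite Cmod_mult, Cmod_R, Rabs_right by lra. reflexivity.
Qed.

Definition is_lim_seq_C (u : nat -> C) (z : C) : Prop :=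
  is_lim_seq (fun l => Re (u l)) (Re z) /\ is_lim_seq (fun l => Im (u l)) (Im z).

Lemma is_lim_seq_C_unique u a b : is_lim_seq_C u a -> is_lim_seq_C u b -> a = b.
Proof.
  intros [Ha1 Ha2] [Hb1 Hb2].
  apply is_lim_seq_unique in Ha1, Ha2, Hb1, Hb2.
  apply injective_projections; apply Rbar_finite_eq;
    [change (Finite (Re a) = Finite (Re b))|change (Finite (Im a) = Finite (Im b))]; congruence.
Qed.

Lemma is_lim_seq_C_ext u v z : (forall l, u l = v l) -> is_lim_seq_C u z -> is_lim_seq_C v z.
Proof. intros H [H1 H2]. split; eapply is_lim_seq_ext; eauto; intros; simpl; rewrite H; auto. Qed.

Lemma is_lim_seq_C_const z : is_lim_seq_C (fun _ => z) z.
Proof. split; apply is_lim_seq_const. Qed.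

Lemma is_lim_seq_C_plus u v a b :
  is_lim_seq_C u a -> is_lim_seq_C v b -> is_lim_seq_C (fun l => u l + v l)%C (a + b)%C.
Proof. intros [Hu1 Hu2] [Hv1 Hv2]. split; apply is_lim_seq_plus'; auto. Qed.

Lemma is_lim_seq_C_mult u v a b :
  is_lim_seq_C u a -> is_lim_seq_C v b -> is_lim_seq_C (fun l => u l * v l)%C (a * b)%C.
Proof.
  intros [Hu1 Hu2] [Hv1 Hv2]. split; simpl.
  - apply is_lim_seq_minus'; apply is_lim_seq_mult'; auto.
  - apply is_lim_seq_plus'; apply is_lim_seq_mult'; auto.
Qed.

Lemma is_lim_seq_C_clin a b c d c' d' k :
  (forall j, is_lim_seq_C (fun l => c l j) (c' j)) -> (forall j, is_lim_seq_C (fun l => d l j) (d' j)) ->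
  is_lim_seq_C (fun l => clin a (c l) b (d l) k) (clin a c' b d' k).
Proof.
  intros Hc Hd. unfold clin.
  apply is_lim_seq_C_plus; apply is_lim_seq_C_mult; auto; apply is_lim_seq_C_const.
Qed.

Lemma is_lim_seq_C_conv N x y x' y' k :
  (forall j, is_lim_seq_C (fun l => x l j) (x' j)) -> (forall j, is_lim_seq_C (fun l => y l j) (y' j)) ->
  is_lim_seq_C (fun l => conv N (x l) (y l) k) (conv N x' y' k).
Proof.
  intros Hx Hy.
  assert (Hxy : forall j j', is_lim_seq_C (fun l => x l j * y l j')%C (x' j * y' j')%C)
    by (intros; apply is_lim_seq_C_mult; auto).
  split; [rewrite Re_conv|rewrite Im_conv]; apply is_lim_seq_zsum2; intros j j';
    (destruct Z.eq_dec; [apply Hxy|apply is_lim_seq_const]).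
Qed.

Lemma is_lim_seq_C_coef_Bop N m m' k :
  (forall j, is_lim_seq_C (fun l => m l j) (m' j)) ->
  is_lim_seq_C (fun l => coef_Bop N (m l) k) (coef_Bop N m' k).
Proof.
  intros Hm. rewrite coef_Bop_conv.
  apply (is_lim_seq_C_ext (fun l => Ci * RtoC (3 * IZR k) * conv N (m l) (m l) k)%C);
    [intros; rewrite coef_Bop_conv; auto|].
  apply is_lim_seq_C_mult; [apply is_lim_seq_C_const|apply is_lim_seq_C_conv; auto].
Qed.

Lemma is_lim_seq_cnorm N s (W : nat -> Z -> C) (W' : Z -> C) :
  (forall j, is_lim_seq_C (fun l => W l j) (W' j)) ->
  is_lim_seq (fun l => cnorm N s (W l)) (cnorm N s W').
Proof.
  intros HW. unfold cnorm, wnorm.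
  apply is_lim_seq_continuous; [apply continuity_pt_sqrt, wnorm_sq_sum_nonneg|].
  apply is_lim_seq_zsum. intros j. destruct (HW j) as [H1 H2].
  apply (is_lim_seq_ext (fun l => sweight s j * (Re (W l j) * Re (W l j) + Im (W l j) * Im (W l j))));
    [intros; rewrite Cmod2_alt; ring|].
  rewrite Cmod2_alt. replace (Re (W' j) ^ 2 + Im (W' j) ^ 2)
    with (Re (W' j) * Re (W' j) + Im (W' j) * Im (W' j)) by ring.
  apply is_lim_seq_mult'; [apply is_lim_seq_const|].
  apply is_lim_seq_plus'; apply is_lim_seq_mult'; auto.
Qed.

Lemma ex_lim_seq_geometric (x : nat -> R) c q : 0 <= q < 1 ->
  (forall l, Rabs (x (S l) - x l) <= c * q ^ l) -> exists L : R, is_lim_seq x L.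
Proof.
  intros Hq H.
  assert (Hex : ex_series (fun i => x (S i) - x i)).
  { apply (ex_series_le (fun i => x (S i) - x i) (fun n => c * q ^ n)); [exact H|].
    exists (scal c (/ (1 - q))). apply (is_series_scal_l c (fun n => q ^ n)).
    apply is_series_geom. rewrite Rabs_right; lra. }
  destruct Hex as [l Hl]. exists (l + x 0%nat).
  apply is_lim_seq_incr_1.
  apply (is_lim_seq_ext (fun n => sum_n (fun i => x (S i) - x i) n + x 0%nat)).
  - intros n. induction n as [|n IH]; [rewrite sum_O; ring|].
    rewrite sum_Sn. unfold plus; simpl. lra.
  - apply is_lim_seq_plus'; [exact Hl|apply is_lim_seq_const].
Qed.

Lemma is_lim_seq_C_conj u z : is_lim_seq_C u z -> is_lim_seq_C (fun l => Cconj (u l)) (Cconj z).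
Proof. intros [H1 H2]. split; [exact H1|]. apply (is_lim_seq_opp _ (Im z)). exact H2. Qed.

Lemma is_lim_seq_C_incr_1 u z : is_lim_seq_C u z -> is_lim_seq_C (fun l => u (S l)) z.
Proof. intros [H1 H2]. split; apply (is_lim_seq_incr_1 (fun l => _ (u l))); auto. Qed.

Definition coef_limit (V : nat -> Z -> C) (k : Z) : C :=
  (real (Lim_seq (fun l => Re (V l k))), real (Lim_seq (fun l => Im (V l k)))).

Lemma is_lim_seq_C_coef_limit (V : nat -> Z -> C) k z :
  is_lim_seq_C (fun l => V l k) z -> is_lim_seq_C (fun l => V l k) (coef_limit V k).
Proof.
  intros [H1 H2]. unfold coef_limit.
  rewrite (is_lim_seq_unique _ _ H1), (is_lim_seq_unique _ _ H2). split; auto.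
Qed.

(** * Convergence of the fixed-point iteration *)

Section FixedPointIteration.

Variables (N : nat) (s dt z : R) (cU : Z -> C) (V : nat -> Z -> C) (t : Z -> R).

Let eta := (8 - z) / (1 - z).
Let q := z * (9 - 2 * z) / (8 - z).
Let mid l := clin (/ 2) cU (/ 2) (V l).
Let incr l := clin 1 (V (S l)) (-1) (V l).

Hypothesis Hs : 2 <= s <= 3.
Hypothesis Hdt : 0 < dt.
Hypothesis Hz : 0 < z < 1.
Hypothesis Hherm : forall l, hermitian (V l).
Hypothesis Hsupp : forall l, supported N (V l).
Hypothesis HV0 : forall j, V 0%nat j = cU j.
Hypothesis Hstep : forall l k, (Z.abs k <= Z.of_nat N)%Z ->
  coef_step (t k) dt (cU k) (V (S l) k) (coef_Bop N (mid l) k).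
Hypothesis Hsmall : 6 * INR N * dt * (eta * cnorm N s cU) <= z.

Lemma eta_gt_8 : 8 < eta.
Proof.
  unfold eta. replace ((8 - z) / (1 - z)) with (8 + 7 * z / (1 - z)) by (field; lra).
  assert (0 < 7 * z / (1 - z)) by (apply Rdiv_lt_0_compat; lra). lra.
Qed.

(* [eta] is chosen so that the ball of radius [eta |U|] is mapped into itself. *)
Lemma eta_absorbs : 1 + z * (1 + eta) ^ 2 / (2 * eta) <= eta.
Proof.
  unfold eta.
  replace (1 + z * (1 + (8 - z) / (1 - z)) ^ 2 / (2 * ((8 - z) / (1 - z))))
    with ((2 * (1 - z) * (8 - z) + z * (9 - 2 * z) ^ 2) / (2 * (1 - z) * (8 - z))) by (field; lra).
  apply Rdiv_le_cross; [nra|lra|].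
  assert (0 <= 112 - 95 * z + 36 * z ^ 2 - 4 * z ^ 3) by nra.
  nra.
Qed.

Lemma contraction_factor : z * (1 + eta) / eta = q /\ 0 <= q < 1.
Proof.
  unfold eta, q. split; [field; lra|]. split.
  - apply Rdiv_le_0_compat; nra.
  - apply Rmult_lt_reg_r with (8 - z); [lra|]. unfold Rdiv. rewrite Rmult_assoc, Rinv_l by lra. nra.
Qed.

Lemma small_step : INR N * dt * cnorm N s cU <= z / (6 * eta).
Proof.
  pose proof eta_gt_8. apply Rmult_le_reg_r with (6 * eta); [lra|].
  replace (z / (6 * eta) * (6 * eta)) with z by (field; lra). lra.
Qed.

Lemma iterates_bounded l : cnorm N s (V l) <= eta * cnorm N s cU.
Proof.
  pose proof eta_gt_8. pose proof small_step. pose proof (pos_INR N).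
  set (nU := cnorm N s cU) in *. assert (HnU : 0 <= nU) by apply cnorm_nonneg.
  assert (Hsmall0 : 0 <= INR N * dt * nU) by (apply Rmult_le_pos; nra).
  induction l as [|l IH].
  - replace (cnorm N s (V 0%nat)) with nU by (apply wnorm_ext; intros; rewrite HV0; auto). nra.
  - assert (Hmid1 : cnorm N s (mid l) <= (1 + eta) * nU / 2)
      by (pose proof (cnorm_mid N s cU (V l)) as Hm; fold nU in Hm; unfold mid; lra).
    pose proof (cnorm_nonneg N s (mid l)).
    assert (Hmid : cnorm N s (mid l) ^ 2 <= ((1 + eta) * nU / 2) ^ 2) by (apply pow_incr; lra).
    assert (HB : dt * cnorm N s (coef_Bop N (mid l)) <= z * (1 + eta) ^ 2 / (2 * eta) * nU).
    { apply Rle_trans with (dt * (12 * INR N * ((1 + eta) * nU / 2) ^ 2)).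
      - apply Rmult_le_compat_l; [lra|]. eapply Rle_trans; [apply cnorm_coef_Bop; auto|].
        apply Rmult_le_compat_l; nra.
      - replace (dt * (12 * INR N * ((1 + eta) * nU / 2) ^ 2))
          with (3 * (INR N * dt * nU) * (1 + eta) ^ 2 * nU) by field.
        replace (z * (1 + eta) ^ 2 / (2 * eta) * nU) with (3 * (z / (6 * eta)) * (1 + eta) ^ 2 * nU)
          by (field; lra).
        apply Rmult_le_compat_r; [auto|]. apply Rmult_le_compat_r; [apply pow2_ge_0|lra]. }
    pose proof (cnorm_coef_step_le N s dt t cU (V (S l)) (coef_Bop N (mid l)) ltac:(lra) (Hstep l))
      as Hnext.
    fold nU in Hnext. pose proof eta_absorbs. nra.
Qed.

Lemma iterates_contract l : cnorm N s (incr (S l)) <= q * cnorm N s (incr l).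
Proof.
  pose proof eta_gt_8. pose proof small_step. pose proof (pos_INR N).
  set (nU := cnorm N s cU) in *. assert (HnU : 0 <= nU) by apply cnorm_nonneg.
  set (D := cnorm N s (incr l)). assert (HD : 0 <= D) by apply cnorm_nonneg.
  assert (Hsum : cnorm N s (mid (S l)) + cnorm N s (mid l) <= (1 + eta) * nU).
  { pose proof (cnorm_mid N s cU (V (S l))) as Hm1. pose proof (cnorm_mid N s cU (V l)) as Hm2.
    pose proof (iterates_bounded (S l)) as Hb1. pose proof (iterates_bounded l) as Hb2.
    fold nU in Hm1, Hm2, Hb1, Hb2. unfold mid. lra. }
  assert (Hsum0 : 0 <= cnorm N s (mid (S l)) + cnorm N s (mid l))
    by (pose proof (cnorm_nonneg N s (mid (S l))); pose proof (cnorm_nonneg N s (mid l)); lra).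
  assert (HB : cnorm N s (clin 1 (coef_Bop N (mid (S l))) (-1) (coef_Bop N (mid l)))
               <= 12 * INR N * (D / 2) * ((1 + eta) * nU)).
  { eapply Rle_trans; [apply cnorm_coef_Bop_diff; auto|].
    unfold mid. rewrite cnorm_mid_diff. fold (incr l) D.
    apply Rmult_le_compat; [nra|auto|lra|auto]. }
  destruct contraction_factor as [<- _].
  eapply Rle_trans; [apply (cnorm_coef_step_diff N s dt t cU); [lra|apply Hstep|apply Hstep]|].
  apply Rle_trans with (dt * (12 * INR N * (D / 2) * ((1 + eta) * nU))); [apply Rmult_le_compat_l; lra|].
  replace (dt * (12 * INR N * (D / 2) * ((1 + eta) * nU))) with (6 * (INR N * dt * nU) * (1 + eta) * D)
    by field.
  replace (z * (1 + eta) / eta * D) with (6 * (z / (6 * eta)) * (1 + eta) * D) by (field; lra).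
  apply Rmult_le_compat_r; auto. apply Rmult_le_compat_r; lra.
Qed.

Lemma iterates_converge k : is_lim_seq_C (fun l => V l k) (coef_limit V k).
Proof.
  destruct (Z_le_dec (Z.abs k) (Z.of_nat N)) as [Hk|Hk].
  - destruct contraction_factor as [_ Hq].
    assert (Hgeom : forall l, cnorm N s (incr l) <= cnorm N s (incr 0%nat) * q ^ l).
    { induction l as [|l IH]; [simpl; lra|].
      pose proof (iterates_contract l). simpl. nra. }
    assert (Hcoord : forall l, Cmod (incr l k) <= cnorm N s (incr 0%nat) * q ^ l)
      by (intros l; eapply Rle_trans; [apply (Cmod_le_cnorm N s); auto; lra|apply Hgeom]).
    destruct (ex_lim_seq_geometric (fun l => Re (V l k)) (cnorm N s (incr 0%nat)) q Hq) as [a Ha].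
    { intros l. eapply Rle_trans; [|apply (Hcoord l)]. unfold incr. rewrite clin_diff_apply.
      eapply Rle_trans; [|apply Rmax_Cmod]. apply Rmax_l. }
    destruct (ex_lim_seq_geometric (fun l => Im (V l k)) (cnorm N s (incr 0%nat)) q Hq) as [b Hb].
    { intros l. eapply Rle_trans; [|apply (Hcoord l)]. unfold incr. rewrite clin_diff_apply.
      eapply Rle_trans; [|apply Rmax_Cmod]. apply Rmax_r. }
    apply (is_lim_seq_C_coef_limit V k (a, b)). split; auto.
  - apply (is_lim_seq_C_coef_limit V k 0%C).
    apply (is_lim_seq_C_ext (fun _ => 0%C)); [intros; rewrite Hsupp; auto; lia|apply is_lim_seq_C_const].
Qed.

Lemma coef_limit_represents : represents N (coef_limit V) (trig_poly N (coef_limit V)).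
Proof.
  split; [|split]; auto.
  - intros j. apply (is_lim_seq_C_unique (fun l => V l (- j)%Z)); [apply iterates_converge|].
    apply (is_lim_seq_C_ext (fun l => Cconj (V l j))); [intros; rewrite Hherm; auto|].
    apply is_lim_seq_C_conj, iterates_converge.
  - intros j Hj. apply (is_lim_seq_C_unique (fun l => V l j)); [apply iterates_converge|].
    apply (is_lim_seq_C_ext (fun _ => 0%C)); [intros; rewrite Hsupp; auto|apply is_lim_seq_C_const].
Qed.

Lemma coef_limit_step k : (Z.abs k <= Z.of_nat N)%Z ->
  coef_step (t k) dt (cU k) (coef_limit V k) (coef_Bop N (clin (/ 2) cU (/ 2) (coef_limit V)) k).
Proof.
  intros Hk. unfold coef_step.
  set (B := coef_Bop N (clin (/ 2) cU (/ 2) (coef_limit V)) k).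
  assert (HB : is_lim_seq_C (fun l => coef_Bop N (mid l) k) B).
  { apply is_lim_seq_C_coef_Bop. intros j. apply is_lim_seq_C_clin; [intros; apply is_lim_seq_C_const|].
    apply iterates_converge. }
  assert (HV1 : is_lim_seq_C (fun l => V (S l) k) (coef_limit V k))
    by apply (is_lim_seq_C_incr_1 (fun l => V l k)), iterates_converge.
  transitivity (cU k + RtoC (- dt) * B + Ci * RtoC (t k) * (cU k + coef_limit V k))%C;
    [|rewrite RtoC_opp; ring].
  apply (is_lim_seq_C_unique (fun l => V (S l) k)); [exact HV1|].
  apply (is_lim_seq_C_ext
           (fun l => cU k + RtoC (- dt) * coef_Bop N (mid l) k
                     + Ci * RtoC (t k) * (cU k + V (S l) k))%C).
  { intros l. rewrite RtoC_opp. symmetry. etransitivity; [apply (Hstep l k Hk)|ring]. }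
  apply is_lim_seq_C_plus.
  - apply is_lim_seq_C_plus; [apply is_lim_seq_C_const|].
    apply is_lim_seq_C_mult; [apply is_lim_seq_C_const|exact HB].
  - apply is_lim_seq_C_mult; [apply is_lim_seq_C_const|].
    apply is_lim_seq_C_plus; [apply is_lim_seq_C_const|exact HV1].
Qed.

Lemma coef_limit_bounded : cnorm N s (coef_limit V) <= eta * cnorm N s cU.
Proof.
  apply (is_lim_seq_le (fun l => cnorm N s (V l)) (fun _ => eta * cnorm N s cU)
           (cnorm N s (coef_limit V)) (eta * cnorm N s cU)).
  - apply iterates_bounded.
  - apply is_lim_seq_cnorm. intros; apply iterates_converge.
  - apply is_lim_seq_const.
Qed.

Lemma iterates_cnorm_to_limit :
  is_lim_seq (fun l => cnorm N s (clin 1 (V l) (-1) (coef_limit V))) 0.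
Proof.
  replace 0 with (cnorm N s (clin 1 (coef_limit V) (-1) (coef_limit V))).
  - apply is_lim_seq_cnorm. intros j. apply is_lim_seq_C_clin; [apply iterates_converge|].
    intros; apply is_lim_seq_C_const.
  - unfold cnorm. rewrite (wnorm_ext N s _ (fun _ => 0 * 1)).
    + rewrite wnorm_scal by lra. ring.
    + intros k _. rewrite clin_diff_apply.
      unfold Cminus. rewrite Cplus_opp_r, Cmod_0. ring.
Qed.

End FixedPointIteration.

Theorem lemma3p3 (N n : nat) (alpha eps T dt zeta : R) (U0 : R -> R) (v : nat -> R -> R) :
  1 <= alpha <= 2 ->
  0 < T ->
  0 < dt ->
  INR (S n) * dt <= T ->
  0 < zeta < 1 ->
  inVN N U0 ->
  (forall l, inVN N (v l)) ->
  (forall x, v 0%nat x = U0 x) ->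
  (forall l, iter_step N alpha eps dt U0 (v l) (v (S l))) ->
  6 * INR N * dt * ((8 - zeta) / (1 - zeta) * hnorm (1 + alpha) U0) <= zeta ->
  exists U1 : R -> R,
    inVN N U1 /\
    scheme_step N alpha eps dt U0 U1 /\
    is_lim_seq (fun l => hnorm (1 + alpha) (fun x => v l x - U1 x)) 0 /\
    hnorm (1 + alpha) U1 <= (8 - zeta) / (1 - zeta) * hnorm (1 + alpha) U0.
Proof.
  intros Hal _ Hdt _ Hz HU Hv Hv0 Hit Hsmall.
  assert (Hs : 2 <= 1 + alpha <= 3) by lra.
  set (V := fun l => fourier (v l)). set (t := fun k => / 2 * eps ^ 2 * dt * disp alpha k).
  assert (HrU := inVN_represents N U0 HU).
  assert (HrV : forall l, represents N (V l) (v l)) by (intros; apply inVN_represents, Hv).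
  rewrite (hnorm_represents N _ _ U0 HrU) in Hsmall |- *.
  assert (Hstep : forall l k, (Z.abs k <= Z.of_nat N)%Z ->
            coef_step (t k) dt (fourier U0 k) (V (S l) k)
              (coef_Bop N (clin (/ 2) (fourier U0) (/ 2) (V l)) k))
    by (intros; apply (iter_step_coef N alpha eps dt U0 (v l) (v (S l))); auto).
  assert (HV0 : forall j, V 0%nat j = fourier U0 j) by (intros; apply fourier_ext, Hv0).
  assert (HrL : represents N (coef_limit V) (trig_poly N (coef_limit V)))
    by (apply (coef_limit_represents N (1 + alpha) dt zeta (fourier U0) V t); auto; intros; apply HrV).
  exists (trig_poly N (coef_limit V)). split; [|split; [|split]].
  - apply trig_poly_inVN.
  - apply (scheme_step_of_coef N alpha eps dt U0 (fourier U0)); try apply HrL; auto.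
    intros k Hk. apply (coef_limit_step N (1 + alpha) dt zeta (fourier U0) V t); auto; intros; apply HrV.
  - apply (is_lim_seq_ext (fun l => cnorm N (1 + alpha) (clin 1 (V l) (-1) (coef_limit V)))).
    + intros l. symmetry. apply hnorm_represents.
      eapply represents_ext; [apply represents_clin; [apply HrV|apply HrL]|intros; simpl; ring].
    + apply (iterates_cnorm_to_limit N (1 + alpha) dt zeta (fourier U0) V t); auto; intros; apply HrV.
  - rewrite (hnorm_represents N _ _ _ HrL).
    apply (coef_limit_bounded N (1 + alpha) dt zeta (fourier U0) V t); auto; intros; apply HrV.
Qed.
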